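(* Let $T$ be a complete classical theory in a countable language (no model a singleton), $\Phi$ a rich sequence and $\mathbf{G}=\mathbf{G}_\Phi(T)$. The map $E\mapsto[E]_{\mathbf{G}}$ is a bijection between definable equivalence relations on $D_\Phi$ (up to equivalence modulo $T$) and the set $\mathcal{H}$ of clopen $\mathbf{H}\subseteq\mathbf{G}$ with $\mathbf{H}=\mathbf{H}\mathbf{H}^{-1}\supseteq\mathbf{B}$. In addition, if $\mathbf{H}=[E]_{\mathbf{G}}$, $a$ realises $D_\Phi$ and enumerates a countable model $M$, and $e=\mathrm{tp}(a)$, then $\mathrm{tp}(a,b)\mathbf{H}\mapsto[b]_E$ is a well-defined bijection from $e\mathbf{G}/\mathbf{H}=\{g\mathbf{H}:t_g=e\}$ onto the set of $E$-classes of tuples in $M$ realising $D_\Phi$.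
   Context: (Single-sorted for simplicity.) $\Phi=(\varphi_n(x_{<n},y))_n$, $y$ a single variable, is rich if every formula $\varphi(x_{<k},y)$ appears (with dummy variables) as $\varphi_n$ for some $n\ge k$. $D_{\Phi,n}(x_{<n})=\bigwedge_{k<n}\forall y[\varphi_k(x_{<k},y)\to\varphi_k(x_{\le k})]$, $D_\Phi=\bigwedge_nD_{\Phi,n}$. $\mathbf{G}_\Phi(T)$ is the set of types $\mathrm{tp}(a,b)$ (logic topology on types of pairs of $\mathbb{N}$-sequences) with $a,b$ realising $D_\Phi$ with the same set of entries; $\mathrm{tp}(a,b)\mathrm{tp}(b,c)=\mathrm{tp}(a,c)$, inverse $\mathrm{tp}(b,a)$, base $\mathbf{B}=\{\mathrm{tp}(a,a)\}$, $t_{\mathrm{tp}(a,b)}=\mathrm{tp}(a)$. A definable equivalence relation on $D_\Phi$ is a formula $E(x,y)$ (only finitely many of the variables $x_i,y_i$ occurring) which, modulo $T$, defines an equivalence relation on the realisations of $D_\Phi$; two are identified if they agree on $D_\Phi$. $[E]_{\mathbf{G}}=\{\mathrm{tp}(a,b)\in\mathbf{G}:E(a,b)\}$. *)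

From Stdlib Require Import Arith Fin.

Set Implicit Arguments.

Record language := {
  func : Type; rel : Type;
  farity : func -> nat; rarity : rel -> nat }.

Definition countable_language (L : language) : Prop :=
  (exists f : func L -> nat, forall x y, f x = f y -> x = y) /\
  (exists g : rel L -> nat, forall x y, g x = g y -> x = y).

Inductive term (L : language) : Type :=
| var : nat -> term L
| app : forall f : func L, (Fin.t (farity L f) -> term L) -> term L.

(* de Bruijn formulas: variable i under d binders refers to the
   assignment entry i-d; All binds index 0.  Classical connectives
   are derived from Fls, Imp, All. *)
Inductive formula (L : language) : Type :=
| Eqf : term L -> term L -> formula L
| Relf : forall r : rel L, (Fin.t (rarity L r) -> term L) -> formula L
| Fls : formula L
| Imp : formula L -> formula L -> formula L
| All : formula L -> formula L.

Arguments var {L}. Arguments Fls {L}.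

Record structure (L : language) := {
  dom :> Type;
  dom_inh : inhabited dom;
  finterp : forall f : func L, (Fin.t (farity L f) -> dom) -> dom;
  rinterp : forall r : rel L, (Fin.t (rarity L r) -> dom) -> Prop }.

Definition scons {X : Type} (x : X) (s : nat -> X) : nat -> X :=
  fun i => match i with 0 => x | S j => s j end.

Fixpoint teval {L} (M : structure L) (s : nat -> M) (t : term L) : M :=
  match t with
  | var i => s i
  | app f args => finterp M f (fun j => teval M s (args j))
  end.

Fixpoint sat {L} (M : structure L) (s : nat -> M) (phi : formula L) : Prop :=
  match phi with
  | Eqf t1 t2 => teval M s t1 = teval M s t2
  | Relf r args => rinterp M r (fun j => teval M s (args j))
  | Fls => False
  | Imp p q => sat M s p -> sat M s q
  | All p => forall m : M, sat M (scons m s) p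
  end.

Fixpoint trename {L} (rho : nat -> nat) (t : term L) : term L :=
  match t with
  | var i => var (rho i)
  | app f args => app f (fun j => trename rho (args j))
  end.

Definition uprn (rho : nat -> nat) : nat -> nat :=
  fun i => match i with 0 => 0 | S j => S (rho j) end.

Fixpoint frename {L} (rho : nat -> nat) (phi : formula L) : formula L :=
  match phi with
  | Eqf t1 t2 => Eqf (trename rho t1) (trename rho t2)
  | Relf r args => Relf r (fun j => trename rho (args j))
  | Fls => Fls
  | Imp p q => Imp (frename rho p) (frename rho q)
  | All p => All (frename (uprn rho) p)
  end.

Fixpoint tfvb {L} (n : nat) (t : term L) : Prop :=
  match t with
  | var i => i < n
  | app f args => forall j, tfvb n (args j)
  end.

Fixpoint ffvb {L} (n : nat) (phi : formula L) : Prop :=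
  match phi with
  | Eqf t1 t2 => tfvb n t1 /\ tfvb n t2
  | Relf r args => forall j, tfvb n (args j)
  | Fls => True
  | Imp p q => ffvb n p /\ ffvb n q
  | All p => ffvb (S n) p
  end.

Definition sentence {L} (phi : formula L) : Prop := ffvb 0 phi.

Definition theory (L : language) := formula L -> Prop.

Definition model {L} (T : theory L) (M : structure L) : Prop :=
  forall sigma, T sigma -> forall s : nat -> M, sat M s sigma.

Definition complete_theory {L} (T : theory L) : Prop :=
  (forall sigma, T sigma -> sentence sigma) /\
  (exists M : structure L, model T M) /\
  (forall sigma, sentence sigma ->
     (forall M : structure L, model T M -> forall s : nat -> M, sat M s sigma) \/
     (forall M : structure L, model T M -> forall s : nat -> M, ~ sat M s sigma)).

Definition no_singleton_model {L} (T : theory L) : Prop :=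
  forall M : structure L, model T M -> exists x y : M, x <> y.

(* phi_n(x_<n, y): x_i is variable i (i < n), y is variable n. *)
Definition seq_ok {L} (Phi : nat -> formula L) : Prop :=
  forall n, ffvb (S n) (Phi n).

Definition move_var (k n : nat) : nat -> nat :=
  fun i => if Nat.eqb i k then n else i.

(* every formula psi(x_<k, y) (free variables among 0..k, y = variable k)
   appears, with dummy variables x_k..x_{n-1}, as phi_n for some n >= k *)
Definition rich {L} (Phi : nat -> formula L) : Prop :=
  forall k (psi : formula L), ffvb (S k) psi ->
    exists n, k <= n /\ Phi n = frename (move_var k n) psi.

Definition upd {X : Type} (s : nat -> X) (k : nat) (y : X) : nat -> X :=
  fun i => if Nat.eqb i k then y else s i.

Definition DPhi {L} (Phi : nat -> formula L) (M : structure L) (a : nat -> M) : Prop :=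
  forall k, (forall y : M, sat M (upd a k y) (Phi k) -> sat M a (Phi k)).

Definition ty (L : language) := formula L -> Prop.
Definition eqty {L} (p q : ty L) : Prop := forall phi, p phi <-> q phi.

Definition tp {L} (M : structure L) (a : nat -> M) : ty L := fun phi => sat M a phi.

(* pair (a,b) of sequences encoded as one sequence: x_i = var 2i, y_i = var 2i+1 *)
Definition pr {X : Type} (a b : nat -> X) : nat -> X :=
  fun i => if Nat.even i then a (Nat.div2 i) else b (Nat.div2 i).

Definition tp2 {L} (M : structure L) (a b : nat -> M) : ty L := tp M (pr a b).

Definition same_entries {X : Type} (a b : nat -> X) : Prop :=
  (forall i, exists j, a i = b j) /\ (forall j, exists i, b j = a i).

Section G.
Context {L : language} (T : theory L) (Phi : nat -> formula L).

Definition Gpair (M : structure L) (a b : nat -> M) : Prop :=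
  model T M /\ DPhi Phi M a /\ DPhi Phi M b /\ same_entries a b.

Definition Gset (p : ty L) : Prop :=
  exists (M : structure L) (a b : nat -> M), Gpair M a b /\ eqty p (tp2 M a b).

Definition Bset (p : ty L) : Prop :=
  exists (M : structure L) (a : nat -> M),
    model T M /\ DPhi Phi M a /\ eqty p (tp2 M a a).

(* logic topology, relativised to G: basic open sets [phi] *)
Definition G_open (U : ty L -> Prop) : Prop :=
  (forall p, U p -> Gset p) /\
  (forall p, U p -> exists phi, p phi /\ forall q, Gset q -> q phi -> U q).

Definition G_clopen (U : ty L -> Prop) : Prop :=
  G_open U /\ G_open (fun p => Gset p /\ ~ U p).

(* H H^{-1} = { tp(a,b) tp(b,c) : tp(a,b) in H, tp(b,c)^{-1} = tp(c,b) in H } *)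
Definition HHinv (H : ty L -> Prop) (k : ty L) : Prop :=
  exists (M : structure L) (a b c : nat -> M),
    Gpair M a b /\ Gpair M c b /\ H (tp2 M a b) /\ H (tp2 M c b) /\
    eqty k (tp2 M a c).

Definition Hcal (H : ty L -> Prop) : Prop :=
  G_clopen H /\ (forall k, H k <-> HHinv H k) /\ (forall p, Bset p -> H p).

(* coset g H = { g h : h in H } with tp(a,b) tp(b,c) = tp(a,c) *)
Definition coset (g : ty L) (H : ty L -> Prop) (k : ty L) : Prop :=
  exists (M : structure L) (a b c : nat -> M),
    Gpair M a b /\ Gpair M b c /\ eqty g (tp2 M a b) /\ H (tp2 M b c) /\
    eqty k (tp2 M a c).

(* e G / H = { g H : g in G, t_g = e } *)
Definition eGmodH (e : ty L) (H : ty L -> Prop) (C : ty L -> Prop) : Prop :=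
  exists (M : structure L) (a b : nat -> M),
    Gpair M a b /\ eqty (tp M a) e /\ (forall k, C k <-> coset (tp2 M a b) H k).

Definition def_equiv (E : formula L) : Prop :=
  forall M : structure L, model T M ->
    (forall a : nat -> M, DPhi Phi M a -> sat M (pr a a) E) /\
    (forall a b : nat -> M, DPhi Phi M a -> DPhi Phi M b ->
        sat M (pr a b) E -> sat M (pr b a) E) /\
    (forall a b c : nat -> M, DPhi Phi M a -> DPhi Phi M b -> DPhi Phi M c ->
        sat M (pr a b) E -> sat M (pr b c) E -> sat M (pr a c) E).

Definition agree_on_D (E E' : formula L) : Prop :=
  forall M : structure L, model T M -> forall a b : nat -> M,
    DPhi Phi M a -> DPhi Phi M b -> (sat M (pr a b) E <-> sat M (pr a b) E').

Definition bracket (E : formula L) (p : ty L) : Prop := Gset p /\ p E.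

End G.

(* The set [E]_G is the basic clopen set of E in G, and reflexivity, symmetry
   and transitivity of E are exactly B ⊆ H and H H⁻¹ = H.  The other
   directions rest on two facts.  First, richness of Φ lets one extend any
   finite tuple satisfying the first few conjuncts of D_Φ to a realisation of
   D_Φ which enumerates a prescribed witness-closed set (for instance the
   entries of another realisation of D_Φ); so E and E' with the same [·]_G
   agree on D_Φ, and every E-class of a countable model M enumerated by a is
   hit by some b with tp(a,b) ∈ G.  Second, for H ∈ 𝓗, compactness gives a
   bound N such that tp(a,b) ∈ H as soon as a and b agree below N (because
   B ⊆ H and H is open), hence membership in H only depends on the first N
   entries of a and b; a second compactness argument, applied to the
   projections onto these entries of the basic open sets inside H and inside
   its complement, yields a formula E in the first 2N variables with
   [E]_G = H.  The cosets tp(a,b)H are then read off inside M, since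
   tp(a,b) = tp(a,a∘σ) is determined by tp(a) and the reindexing σ. *)

From Pilot Require Import Defs.
From Stdlib Require Import Arith Fin.
From Stdlib Require Import Lia List Cantor.
From Stdlib Require Import FunctionalExtensionality PropExtensionality
  ClassicalEpsilon ProofIrrelevance Classical.
Import ListNotations.

Arguments to_nat : simpl never.

(** * Syntax *)

Section Syntax.
Context {L : language}.

Lemma teval_rename (M : structure L) (s : nat -> M) rho (t : term L) :
  teval M s (trename rho t) = teval M (fun v => s (rho v)) t.
Proof.
  induction t as [i|f args IH]; simpl; auto.
  f_equal. apply functional_extensionality. intro j. apply IH.
Qed.

Lemma sat_rename (M : structure L) rho (phi : formula L) : forall (s : nat -> M),
  sat M s (frename rho phi) <-> sat M (fun v => s (rho v)) phi.
Proof.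
  revert rho; induction phi as [t1 t2|r args| |p IHp q IHq|p IHp]; intros rho s; simpl.
  - rewrite !teval_rename. tauto.
  - assert (E : (fun j => teval M s (trename rho (args j)))
                = (fun j => teval M (fun v => s (rho v)) (args j))).
    { apply functional_extensionality; intro; apply teval_rename. }
    rewrite E; tauto.
  - tauto.
  - rewrite IHp, IHq; tauto.
  - assert (E : forall m, (fun v => scons m s (uprn rho v)) = scons m (fun v => s (rho v)))
      by (intro m; apply functional_extensionality; intros [|v]; reflexivity).
    split; intros H m; specialize (H m); rewrite IHp, ?E in *; exact H.
Qed.

Lemma sat_rename_eq (M : structure L) (s s' : nat -> M) rho phi :
  (forall v, s (rho v) = s' v) -> (sat M s (frename rho phi) <-> sat M s' phi).
Proof.
  intro H. rewrite sat_rename.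
  replace (fun v => s (rho v)) with s' by (apply functional_extensionality; auto).
  tauto.
Qed.

Lemma teval_coinc (M : structure L) (t : term L) : forall n (s s' : nat -> M),
  tfvb n t -> (forall v, v < n -> s v = s' v) -> teval M s t = teval M s' t.
Proof.
  induction t as [i|f args IH]; intros n s s' Hf He; simpl in *; auto.
  f_equal. apply functional_extensionality. intro j. eapply IH; eauto.
Qed.

Lemma sat_coinc (M : structure L) (phi : formula L) : forall n (s s' : nat -> M),
  ffvb n phi -> (forall v, v < n -> s v = s' v) -> (sat M s phi <-> sat M s' phi).
Proof.
  induction phi as [t1 t2|r args| |p IHp q IHq|p IHp]; intros n s s' Hf He; simpl in *.
  - destruct Hf as [H1 H2].
    rewrite (teval_coinc M t1 n s s' H1 He), (teval_coinc M t2 n s s' H2 He). tauto.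
  - assert (E : (fun j => teval M s (args j)) = (fun j => teval M s' (args j))).
    { apply functional_extensionality; intro j; eapply teval_coinc; eauto. }
    rewrite E; tauto.
  - tauto.
  - destruct Hf as [H1 H2]. rewrite (IHp n s s' H1 He), (IHq n s s' H2 He). tauto.
  - assert (E : forall m, sat M (scons m s) p <-> sat M (scons m s') p).
    { intro m. apply (IHp (S n)); [exact Hf|]. intros [|v] Hv; simpl; auto. apply He; lia. }
    split; intros H m; apply E; auto.
Qed.

Lemma tfvb_mono (t : term L) : forall n m, n <= m -> tfvb n t -> tfvb m t.
Proof. induction t; simpl; intros; eauto; lia. Qed.

Lemma ffvb_mono (phi : formula L) : forall n m, n <= m -> ffvb n phi -> ffvb m phi.
Proof.
  induction phi; simpl; intros n m Hle H; intuition eauto using tfvb_mono.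
  eapply IHphi; [|exact H]; lia.
Qed.

Lemma tfvb_rename (t : term L) : forall n m rho,
  tfvb n t -> (forall v, v < n -> rho v < m) -> tfvb m (trename rho t).
Proof. induction t; simpl; intros; eauto. Qed.

Lemma ffvb_rename (phi : formula L) : forall n m rho,
  ffvb n phi -> (forall v, v < n -> rho v < m) -> ffvb m (frename rho phi).
Proof.
  induction phi; simpl; intros n m rho H Hr; intuition eauto using tfvb_rename.
  eapply IHphi; [exact H|]. intros [|v] Hv; simpl; [lia|]. specialize (Hr v). lia.
Qed.

Lemma trename_comp (t : term L) r1 r2 :
  trename r1 (trename r2 t) = trename (fun v => r1 (r2 v)) t.
Proof.
  induction t; simpl; auto. f_equal. apply functional_extensionality; auto.
Qed.

Lemma frename_comp (phi : formula L) : forall r1 r2,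
  frename r1 (frename r2 phi) = frename (fun v => r1 (r2 v)) phi.
Proof.
  induction phi; intros; simpl; rewrite ?trename_comp; auto.
  - f_equal. apply functional_extensionality; intro; apply trename_comp.
  - f_equal; auto.
  - f_equal. rewrite IHphi. f_equal. apply functional_extensionality. intros [|v]; reflexivity.
Qed.

Fixpoint finmax (n : nat) : (Fin.t n -> nat) -> nat :=
  match n with
  | 0 => fun _ => 0
  | S n' => fun g => Nat.max (g Fin.F1) (finmax n' (fun k => g (Fin.FS k)))
  end.

Lemma finmax_ge : forall n (k : Fin.t n) (g : Fin.t n -> nat), g k <= finmax n g.
Proof.
  induction k; intros g; simpl.
  - lia.
  - specialize (IHk (fun k => g (Fin.FS k))). simpl in IHk. lia.
Qed.

Fixpoint fin_list (n : nat) : list (Fin.t n) :=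
  match n with
  | 0 => []
  | S n' => Fin.F1 :: map Fin.FS (fin_list n')
  end.

Lemma fin_list_In : forall n (k : Fin.t n), In k (fin_list n).
Proof. induction k; simpl; auto. right. apply in_map. auto. Qed.

Fixpoint tfv (t : term L) : nat :=
  match t with
  | var i => S i
  | Defs.app f args => finmax (farity L f) (fun k => tfv (args k))
  end.

Fixpoint ffv (phi : formula L) : nat :=
  match phi with
  | Eqf t1 t2 => Nat.max (tfv t1) (tfv t2)
  | Relf r args => finmax (rarity L r) (fun k => tfv (args k))
  | Fls => 0
  | Imp p q => Nat.max (ffv p) (ffv q)
  | All p => pred (ffv p)
  end.

Lemma tfv_ok (t : term L) : tfvb (tfv t) t.
Proof.
  induction t; simpl; [lia|]. intro j. eapply tfvb_mono; [|apply H].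
  apply (finmax_ge _ j (fun k => tfv (t k))).
Qed.

Lemma ffv_ok (phi : formula L) : ffvb (ffv phi) phi.
Proof.
  induction phi; simpl.
  - split; eapply tfvb_mono; try apply tfv_ok; lia.
  - intro j. eapply tfvb_mono; [|apply tfv_ok]. apply (finmax_ge _ j (fun k => tfv (t k))).
  - auto.
  - split; [apply (ffvb_mono phi1 (ffv phi1))|apply (ffvb_mono phi2 (ffv phi2))]; auto; lia.
  - apply (ffvb_mono phi (ffv phi)); auto; lia.
Qed.

Fixpoint ffv_list (l : list (formula L)) : nat :=
  match l with [] => 0 | x :: l => ffv x + ffv_list l end.

Lemma ffv_list_ge l x : In x l -> ffv x <= ffv_list l.
Proof. induction l; simpl; [tauto|]. intros [->|H]; [lia|]. specialize (IHl H); lia. Qed.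

Lemma pr_even {X} (a b : nat -> X) i : pr a b (2 * i) = a i.
Proof. unfold pr. rewrite Nat.even_even, Nat.div2_double. auto. Qed.

Lemma pr_odd {X} (a b : nat -> X) i : pr a b (2 * i + 1) = b i.
Proof. unfold pr. rewrite Nat.even_odd, Nat.div2_odd'. auto. Qed.

Lemma even_or_odd v : exists i, v = 2 * i \/ v = 2 * i + 1.
Proof.
  exists (Nat.div2 v). pose proof (Nat.div2_odd v). destruct (Nat.odd v); simpl in *; lia.
Qed.

Lemma pr_halves {X} (s : nat -> X) : s = pr (fun i => s (2 * i)) (fun i => s (2 * i + 1)).
Proof.
  apply functional_extensionality. intro v.
  destruct (even_or_odd v) as [i [-> | ->]]; rewrite ?pr_even, ?pr_odd; auto.
Qed.

Lemma pr_diag {X} (a : nat -> X) : pr a a = fun v => a (Nat.div2 v).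
Proof. apply functional_extensionality; intro v. unfold pr. destruct (Nat.even v); auto. Qed.

Lemma pr_comp {X} (a : nat -> X) s t :
  pr (fun i => a (s i)) (fun i => a (t i)) = (fun v => a (pr s t v)).
Proof. apply functional_extensionality; intro v. unfold pr. destruct (Nat.even v); auto. Qed.

Lemma sat_pr_even (M : structure L) (a b : nat -> M) phi :
  sat M (pr a b) (frename (fun v => 2 * v) phi) <-> sat M a phi.
Proof. apply sat_rename_eq. intro; apply pr_even. Qed.

Lemma sat_pr_odd (M : structure L) (a b : nat -> M) phi :
  sat M (pr a b) (frename (fun v => 2 * v + 1) phi) <-> sat M b phi.
Proof. apply sat_rename_eq. intro; apply pr_odd. Qed.

Lemma sat_pr_prefix (M : structure L) (a b a' b' : nat -> M) N phi :
  (forall i, i < N -> a i = a' i /\ b i = b' i) -> ffvb (2 * N) phi ->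
  (sat M (pr a b) phi <-> sat M (pr a' b') phi).
Proof.
  intros H Hf. apply (sat_coinc M phi (2 * N)); auto. intros v Hv.
  destruct (even_or_odd v) as [i [-> | ->]]; rewrite ?pr_even, ?pr_odd; apply H; lia.
Qed.

Lemma ffvb_pr (phi : formula L) N : ffv phi <= N -> ffvb (2 * N) phi.
Proof. intro. apply (ffvb_mono phi (ffv phi)); [lia|apply ffv_ok]. Qed.

End Syntax.

Section Connectives.
Context {L : language}.

Definition neg (p : formula L) : formula L := Imp p Fls.
Definition And (p q : formula L) : formula L := neg (Imp p (neg q)).
Definition Or (p q : formula L) : formula L := Imp (neg p) q.
Definition Ex (p : formula L) : formula L := neg (All (neg p)).

Lemma sat_And (M : structure L) s p q : sat M s (And p q) <-> sat M s p /\ sat M s q.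
Proof. simpl. tauto. Qed.

Lemma sat_Or (M : structure L) s p q : sat M s (Or p q) <-> sat M s p \/ sat M s q.
Proof. simpl. tauto. Qed.

Lemma sat_Ex (M : structure L) s p : sat M s (Ex p) <-> exists m, sat M (scons m s) p.
Proof.
  simpl. split.
  - intro H. apply NNPP. intro N. apply H. intros m Hm. apply N. eauto.
  - intros [m Hm] H. exact (H m Hm).
Qed.

Lemma ffvb_And m (p q : formula L) : ffvb m p -> ffvb m q -> ffvb m (And p q).
Proof. intros; simpl; tauto. Qed.

Lemma disj_exists {A} (P : A -> Prop) (f : A -> formula L) n (l : list A) :
  (forall x, In x l -> ffvb n (f x)) ->
  exists chi, ffvb n chi /\ forall (M : structure L) (s : nat -> M),
    sat M s chi <-> exists x, In x l /\ P x /\ sat M s (f x).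
Proof.
  induction l as [|x l IH]; intro Hf.
  - exists Fls. split; [simpl; auto|]. intros M s. simpl. firstorder.
  - destruct IH as [chi [Hchi Hsat]]; [intros; apply Hf; simpl; auto|].
    destruct (classic (P x)) as [Px|Nx].
    + exists (Or (f x) chi). split; [simpl; split; [split|]; auto; apply Hf; simpl; auto|].
      intros M s. rewrite sat_Or, Hsat. simpl.
      split; [intros [X|[y [I R]]]; eauto|intros [y [[<-|I] R]]; [left|right; exists y]; tauto].
    + exists chi. split; auto. intros M s. rewrite Hsat. simpl.
      split; [intros [y [I R]]; eauto|intros [y [[<-|I] R]]; [tauto|eauto]].
Qed.

End Connectives.

(** * Compactness *)

Lemma split_list {A} (P Q : A -> Prop) l : (forall x, In x l -> P x \/ Q x) ->
  exists l1, (forall x, In x l1 -> P x) /\ (forall x, In x l -> In x l1 \/ Q x).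
Proof.
  induction l as [|x l IH]; intros H.
  - exists []. simpl; tauto.
  - destruct IH as [l1 [H1 H2]]; [intros; apply H; simpl; auto|].
    destruct (H x (or_introl eq_refl)) as [Px|Qx].
    + exists (x :: l1). split; [intros y [<-|Hy]; auto|].
      intros y [<-|Hy]; simpl; auto. destruct (H2 y Hy); auto.
    + exists l1. split; auto. intros y [<-|Hy]; auto.
Qed.

Lemma list_preimage {A B} (P : A -> Prop) (f : A -> B) (l : list B) :
  (forall y, In y l -> exists x, P x /\ y = f x) ->
  exists l', (forall x, In x l' -> P x) /\ (forall y, In y l -> exists x, In x l' /\ y = f x).
Proof.
  induction l as [|y l IH]; intro H.
  - exists []. simpl; tauto.
  - destruct IH as [l' [H1 H2]]; [intros; apply H; simpl; auto|].
    destruct (H y (or_introl eq_refl)) as [x [Px ->]].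
    exists (x :: l'). split; [intros z [<-|Hz]; auto|].
    intros z [<-|Hz]; [exists x; simpl; auto|].
    destruct (H2 z Hz) as [w [Hw ->]]. exists w; simpl; auto.
Qed.

Section Coding.
Context {L : language} (fF : func L -> nat) (fR : rel L -> nat)
  (HfF : forall x y, fF x = fF y -> x = y) (HfR : forall x y, fR x = fR y -> x = y).

Lemma to_nat_inj p q : to_nat p = to_nat q -> p = q.
Proof. intro H. rewrite <- (cancel_of_to p), <- (cancel_of_to q), H. auto. Qed.

Fixpoint code_list (l : list nat) : nat :=
  match l with [] => 0 | x :: l => S (to_nat (x, code_list l)) end.

Lemma code_list_inj : forall l1 l2, code_list l1 = code_list l2 -> l1 = l2.
Proof.
  induction l1 as [|x l1 IH]; intros [|y l2] H; simpl in *; try discriminate; auto.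
  injection H as H. apply to_nat_inj in H. injection H as -> H. f_equal; auto.
Qed.

Definition code_args {n} (c : term L -> nat) (args : Fin.t n -> term L) : nat :=
  code_list (map (fun k => c (args k)) (fin_list n)).

Lemma code_args_inj {n} (c : term L -> nat) (args args' : Fin.t n -> term L) :
  (forall k t, c (args k) = c t -> args k = t) ->
  code_args c args = code_args c args' -> args = args'.
Proof.
  intros Hc H. apply code_list_inj in H. apply functional_extensionality. intro k. apply Hc.
  assert (Hk := fin_list_In n k). revert H Hk. generalize (fin_list n).
  induction l as [|x l IH]; simpl; intros H Hk; [contradiction|]. injection H as H1 H2.
  destruct Hk as [->|Hk]; auto.
Qed.

Fixpoint code_t (t : term L) : nat :=
  match t with
  | var i => to_nat (0, i)
  | Defs.app f args => to_nat (S (fF f), code_args code_t args)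
  end.

Lemma code_t_inj : forall t1 t2, code_t t1 = code_t t2 -> t1 = t2.
Proof.
  induction t1 as [i|f args IH]; intros [j|g args2] H; simpl in H; apply to_nat_inj in H;
    injection H; intros; try discriminate.
  - subst; auto.
  - apply HfF in H1. subst g. apply code_args_inj in H0; [subst; auto|]. auto.
Qed.

Fixpoint code_f (phi : formula L) : nat :=
  match phi with
  | Eqf t1 t2 => to_nat (0, to_nat (code_t t1, code_t t2))
  | Relf r args => to_nat (1, to_nat (fR r, code_args code_t args))
  | Fls => to_nat (2, 0)
  | Imp p q => to_nat (3, to_nat (code_f p, code_f q))
  | All p => to_nat (4, code_f p)
  end.

Lemma code_f_inj : forall p q, code_f p = code_f q -> p = q.
Proof.
  induction p as [t1 t2|r args| |p1 IH1 p2 IH2|p IH]; intros [u1 u2|r2 args2| |q1 q2|q] H;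
    simpl in H; apply to_nat_inj in H; try discriminate; try reflexivity; injection H; intros.
  - apply to_nat_inj in H0. injection H0; intros. apply code_t_inj in H1, H2. subst; auto.
  - apply to_nat_inj in H0. injection H0; intros. apply HfR in H2. subst r2.
    apply code_args_inj in H1; [subst; auto|]. intros; apply code_t_inj; auto.
  - apply to_nat_inj in H0. injection H0; intros. f_equal; auto.
  - f_equal; auto.
Qed.

End Coding.

Lemma formula_enumeration {L : language} (HL : countable_language L) :
  exists en : nat -> formula L, forall phi, exists n, en n = phi.
Proof.
  destruct HL as [[fF HfF] [fR HfR]].
  exists (fun n => epsilon (inhabits Fls) (fun phi => code_f fF fR phi = n)).
  intro phi. exists (code_f fF fR phi). apply (code_f_inj fF fR HfF HfR).
  apply (epsilon_spec (inhabits Fls) (fun p => code_f fF fR p = code_f fF fR phi)). eauto.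
Qed.

Section Henkin.
Context {L : language} (T : theory L) (en : nat -> formula L)
  (en_surj : forall phi, exists n, en n = phi).

Definition satisfiable_list (l : list (formula L)) : Prop :=
  exists (M : structure L) (s : nat -> M), model T M /\ forall psi, In psi l -> sat M s psi.

Definition fin_sat (G : formula L -> Prop) : Prop :=
  forall l, (forall psi, In psi l -> G psi) -> satisfiable_list l.

Lemma fin_sat_sub (G G' : formula L -> Prop) : (forall p, G p -> G' p) -> fin_sat G' -> fin_sat G.
Proof. intros H F l Hl. apply F. intros; auto. Qed.

Variable Sig : formula L -> Prop.
Hypothesis Sig_fin_sat : fin_sat Sig.

Definition dbl (v : nat) := 2 * v.

(* Sig is moved to the even variables, so that odd variables are free to serve
   as Henkin constants. *)
Definition Sig_even (psi : formula L) : Prop := exists phi, Sig phi /\ psi = frename dbl phi.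

Lemma fin_sat_Sig_even : fin_sat Sig_even.
Proof.
  intros l Hl.
  destruct (list_preimage Sig (frename dbl) l Hl) as [l' [H1 H2]].
  destruct (Sig_fin_sat l' H1) as [M [s [HM Hs]]].
  exists M, (fun v => s (Nat.div2 v)). split; auto.
  intros psi Hp. destruct (H2 psi Hp) as [phi [Hphi ->]].
  apply (sat_rename_eq M _ s); [|auto]. intro v. unfold dbl. rewrite Nat.div2_double. auto.
Qed.

Lemma Sig_even_coinc psi (M : structure L) (s s' : nat -> M) :
  Sig_even psi -> (forall v, s (2 * v) = s' (2 * v)) -> (sat M s psi <-> sat M s' psi).
Proof.
  intros [phi [_ ->]] H. rewrite !sat_rename. unfold dbl.
  replace (fun v => s (2 * v)) with (fun v => s' (2 * v))
    by (apply functional_extensionality; auto).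
  tauto.
Qed.

Definition henkin_witness (chi : formula L) (w : nat) : list (formula L) :=
  match chi with
  | Imp (All p) Fls => [neg (frename (scons w (fun v => v)) p)]
  | _ => []
  end.

Definition with_Sig (l : list (formula L)) (psi : formula L) : Prop := Sig_even psi \/ In psi l.

(* The witness variable [S (2 * ffv_list _)] is odd and beyond the free
   variables of the current stage. *)
Fixpoint stage (n : nat) : list (formula L) :=
  match n with
  | 0 => []
  | S n =>
      let B := stage n in
      if excluded_middle_informative (fin_sat (with_Sig (en n :: B)))
      then henkin_witness (en n) (S (2 * ffv_list (en n :: B))) ++ en n :: B
      else B
  end.

Lemma stage_mono : forall n m psi, n <= m -> In psi (stage n) -> In psi (stage m).
Proof.
  intros n m psi Hle. induction Hle; auto. intro H. simpl.
  destruct excluded_middle_informative; auto. apply in_or_app. right. right. auto.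
Qed.

Lemma henkin_witness_sat (M : structure L) (s : nat -> M) p w :
  sat M s (neg (All p)) -> ffv (All p) < w ->
  exists s', (forall v, v <> w -> s' v = s v) /\ sat M s' (neg (frename (scons w (fun v => v)) p)).
Proof.
  intros Hn Hw. apply not_all_ex_not in Hn as [m Hm].
  exists (fun v => if Nat.eqb v w then m else s v). split.
  - intros v Hv. destruct (Nat.eqb_spec v w); [contradiction|auto].
  - simpl. intro Hq. apply Hm. revert Hq. rewrite sat_rename.
    apply (sat_coinc M p (ffv p)); [apply ffv_ok|].
    intros [|v] Hv; simpl; [rewrite Nat.eqb_refl; auto|].
    destruct (Nat.eqb_spec v w); [simpl in Hw; lia|auto].
Qed.

Lemma fin_sat_henkin_witness chi B : fin_sat (with_Sig (chi :: B)) ->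
  fin_sat (with_Sig (henkin_witness chi (S (2 * ffv_list (chi :: B))) ++ chi :: B)).
Proof.
  intros F. set (w := S (2 * ffv_list (chi :: B))).
  destruct chi as [| | |[| | | |p] []|]; simpl henkin_witness; simpl app; auto.
  fold w. intros l Hl.
  destruct (split_list (with_Sig (neg (All p) :: B))
             (fun psi => psi = neg (frename (scons w (fun v => v)) p)) l) as [l1 [H1 H2]].
  { intros psi Hp. destruct (Hl psi Hp) as [G|[<-|I]]; unfold with_Sig; auto. }
  destruct (F (neg (All p) :: l1)) as [M [s [HM Hs]]].
  { intros psi [<-|Hp]; [right; left; auto|auto]. }
  assert (Hbnd : forall x, In x (neg (All p) :: B) -> ffv x < w).
  { intros x Hx. apply ffv_list_ge in Hx. unfold w, neg in *. lia. }
  destruct (henkin_witness_sat M s p w (Hs _ (or_introl eq_refl)))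
    as [s' [Hs' Hw]]; [specialize (Hbnd _ (or_introl eq_refl)); simpl in *; lia|].
  exists M, s'. split; auto.
  intros psi Hp. destruct (H2 psi Hp) as [Hp1| ->]; auto.
  destruct (H1 psi Hp1) as [G|I].
  - apply (Sig_even_coinc psi M s); [auto| |apply Hs; simpl; auto].
    intro v. rewrite Hs'; auto. unfold w. lia.
  - apply (sat_coinc M psi (ffv psi) s); [apply ffv_ok| |apply Hs; simpl; auto].
    intros v Hv. rewrite Hs'; auto. specialize (Hbnd psi I). lia.
Qed.

Lemma fin_sat_stage n : fin_sat (with_Sig (stage n)).
Proof.
  induction n; simpl.
  - apply (fin_sat_sub _ Sig_even); [|apply fin_sat_Sig_even]. intros p [H|[]]; auto.
  - destruct excluded_middle_informative as [F|F]; auto. apply fin_sat_henkin_witness; auto.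
Qed.

Definition Gamma (psi : formula L) : Prop := Sig_even psi \/ exists n, In psi (stage n).

Lemma fin_sat_Gamma : fin_sat Gamma.
Proof.
  intros l Hl.
  assert (exists n, forall psi, In psi l -> with_Sig (stage n) psi) as [n Hn].
  { clear -Hl. induction l as [|x l IH].
    - exists 0. simpl; tauto.
    - destruct IH as [n Hn]; [intros; apply Hl; simpl; auto|].
      destruct (Hl x (or_introl eq_refl)) as [G|[m Hm]].
      + exists n. intros psi [<-|Hp]; [left; auto|auto].
      + exists (n + m). intros psi [<-|Hp].
        * right. apply (stage_mono m); auto. lia.
        * destruct (Hn psi Hp) as [G|I]; [left; auto|right]. apply (stage_mono n); auto. lia. }
  apply (fin_sat_stage n). auto.
Qed.

Lemma stage_rejects n : ~ Gamma (en n) -> ~ fin_sat (with_Sig (en n :: stage n)).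
Proof.
  intros H F. apply H. right. exists (S n). simpl.
  destruct excluded_middle_informative; [|contradiction].
  apply in_or_app; right; left; auto.
Qed.

Lemma not_fin_sat_cons phi m : ~ Gamma phi -> phi = en m -> forall n, m <= n ->
  exists l, (forall p, In p l -> with_Sig (stage n) p) /\ ~ satisfiable_list (phi :: l).
Proof.
  intros H -> n Hn. apply stage_rejects in H.
  assert (F : ~ fin_sat (with_Sig (en m :: stage n))).
  { intro F. apply H. revert F. apply fin_sat_sub.
    intros p [G|[<-|I]]; [left|right; left|right; right]; auto.
    apply (stage_mono m); auto. }
  apply not_all_ex_not in F as [l1 F]. apply imply_to_and in F as [Hl1 Nl1].
  destruct (split_list (with_Sig (stage n)) (fun p => p = en m) l1) as [k1 [K1 K1']].
  { intros p Hp. destruct (Hl1 p Hp) as [G|[<-|I]]; unfold with_Sig; auto. }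
  exists k1. split; auto. intros [M [s [HM Hs]]]. apply Nl1. exists M, s. split; auto.
  intros p Hp. destruct (K1' p Hp) as [I| ->]; apply Hs; simpl; auto.
Qed.

Lemma Gamma_complete phi : Gamma phi \/ Gamma (neg phi).
Proof.
  apply NNPP. intro H. apply not_or_and in H as [H1 H2].
  destruct (en_surj phi) as [n En]. destruct (en_surj (neg phi)) as [m Em].
  destruct (not_fin_sat_cons phi n H1 (eq_sym En) (n + m)) as [k1 [K1 N1]]; [lia|].
  destruct (not_fin_sat_cons (neg phi) m H2 (eq_sym Em) (n + m)) as [k2 [K2 N2]]; [lia|].
  destruct (fin_sat_stage (n + m) (k1 ++ k2)) as [M [s [HM Hs]]].
  { intros p Hp. apply in_app_or in Hp as [Hp|Hp]; auto. }
  destruct (classic (sat M s phi)) as [Y|N].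
  - apply N1. exists M, s. split; auto. intros p [<-|Hp]; auto. apply Hs, in_or_app; auto.
  - apply N2. exists M, s. split; auto. intros p [<-|Hp]; auto. apply Hs, in_or_app; auto.
Qed.

Lemma Gamma_closed l phi : (forall psi, In psi l -> Gamma psi) ->
  (forall (M : structure L) (s : nat -> M), model T M ->
     (forall psi, In psi l -> sat M s psi) -> sat M s phi) ->
  Gamma phi.
Proof.
  intros Hl Hc. destruct (Gamma_complete phi) as [|Hn]; auto.
  destruct (fin_sat_Gamma (neg phi :: l)) as [M [s [HM Hs]]]; [intros p [<-|Hp]; auto|].
  exfalso. apply (Hs _ (or_introl eq_refl)). apply Hc; auto. intros; apply Hs; simpl; auto.
Qed.

Lemma Gamma_Fls : ~ Gamma Fls.
Proof.
  intro H. destruct (fin_sat_Gamma [Fls]) as [M [s [_ Hs]]]; [intros p [<-|[]]; auto|].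
  exact (Hs _ (or_introl eq_refl)).
Qed.

Lemma Gamma_imp p q : Gamma (Imp p q) <-> (Gamma p -> Gamma q).
Proof.
  split.
  - intros H Hp. apply (Gamma_closed [Imp p q; p]); [intros x [<-|[<-|[]]]; auto|].
    intros M s _ Hs. apply (Hs _ (or_introl eq_refl)). apply Hs; simpl; auto.
  - intro H. destruct (Gamma_complete p) as [Hp|Hp].
    + apply (Gamma_closed [q]); [intros x [<-|[]]; auto|].
      intros M s _ Hs _. apply Hs; simpl; auto.
    + apply (Gamma_closed [neg p]); [intros x [<-|[]]; auto|].
      intros M s _ Hs Hp'. exfalso. apply (Hs _ (or_introl eq_refl)). auto.
Qed.

Lemma Gamma_henkin p : Gamma (neg (All p)) ->
  exists w, Gamma (neg (frename (scons w (fun v => v)) p)).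
Proof.
  intro H. destruct (en_surj (neg (All p))) as [n Hn].
  assert (F : fin_sat (with_Sig (en n :: stage n))).
  { apply (fin_sat_sub _ Gamma); [|apply fin_sat_Gamma].
    intros x [G|[<-|I]]; [left; auto|rewrite Hn; auto|right; eauto]. }
  exists (S (2 * ffv_list (en n :: stage n))). right. exists (S n). simpl.
  destruct excluded_middle_informative; [|contradiction].
  apply in_or_app. left. rewrite Hn. simpl. auto.
Qed.

Lemma Gamma_all p : Gamma (All p) <-> forall j, Gamma (frename (scons j (fun v => v)) p).
Proof.
  split.
  - intros H j. apply (Gamma_closed [All p]); [intros x [<-|[]]; auto|].
    intros M s _ Hs. apply (sat_rename_eq M s (scons (s j) s)); [intros [|v]; reflexivity|].
    apply (Hs _ (or_introl eq_refl)).
  - intro H. destruct (Gamma_complete (All p)) as [|Hn]; auto.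
    destruct (Gamma_henkin p Hn) as [w Hw]. exfalso.
    apply Gamma_Fls. apply (proj1 (Gamma_imp _ _) Hw). apply H.
Qed.

Lemma Gamma_eqf_refl t : Gamma (Eqf t t).
Proof. apply (Gamma_closed []); [intros _ []|]. intros; simpl; auto. Qed.

Lemma Gamma_eqf_sym t u : Gamma (Eqf t u) -> Gamma (Eqf u t).
Proof.
  intro H. apply (Gamma_closed [Eqf t u]); [intros x [<-|[]]; auto|].
  intros M s _ Hs. specialize (Hs _ (or_introl eq_refl)). simpl in *. auto.
Qed.

Lemma Gamma_eqf_trans t u v : Gamma (Eqf t u) -> Gamma (Eqf u v) -> Gamma (Eqf t v).
Proof.
  intros H1 H2. apply (Gamma_closed [Eqf t u; Eqf u v]); [intros x [<-|[<-|[]]]; auto|].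
  intros M s _ Hs. pose proof (Hs _ (or_introl eq_refl)).
  pose proof (Hs _ (or_intror (or_introl eq_refl))). simpl in *. congruence.
Qed.

Definition eqs {n} (u u' : Fin.t n -> term L) : list (formula L) :=
  map (fun k => Eqf (u k) (u' k)) (fin_list n).

Lemma Gamma_eqs {n} (u u' : Fin.t n -> term L) :
  (forall k, Gamma (Eqf (u k) (u' k))) -> forall x, In x (eqs u u') -> Gamma x.
Proof. intros H x Hx. apply in_map_iff in Hx as [k [<- _]]. auto. Qed.

Lemma sat_eqs {n} (M : structure L) s (u u' : Fin.t n -> term L) :
  (forall x, In x (eqs u u') -> sat M s x) ->
  (fun k => teval M s (u k)) = (fun k => teval M s (u' k)).
Proof.
  intro H. apply functional_extensionality. intro k. apply (H (Eqf (u k) (u' k))).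
  apply in_map_iff. exists k. split; [reflexivity|apply fin_list_In].
Qed.

Lemma Gamma_app_congr f (u u' : Fin.t (farity L f) -> term L) :
  (forall k, Gamma (Eqf (u k) (u' k))) -> Gamma (Eqf (Defs.app f u) (Defs.app f u')).
Proof.
  intro H. apply (Gamma_closed (eqs u u')); [apply Gamma_eqs; auto|].
  intros M s _ Hs. simpl. f_equal. apply sat_eqs. auto.
Qed.

Lemma Gamma_rel_congr r (u u' : Fin.t (rarity L r) -> term L) :
  (forall k, Gamma (Eqf (u k) (u' k))) -> Gamma (Relf r u) -> Gamma (Relf r u').
Proof.
  intros H Hr. apply (Gamma_closed (Relf r u :: eqs u u')).
  - intros x [<-|Hx]; auto. apply (Gamma_eqs u u'); auto.
  - intros M s _ Hs. simpl. rewrite <- (sat_eqs M s u u'); [|intros; apply Hs; simpl; auto].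
    exact (Hs _ (or_introl eq_refl)).
Qed.

Definition Dom : Type :=
  {P : nat -> Prop | exists i, P = fun j => Gamma (Eqf (var i) (var j))}.

Definition cls (i : nat) : Dom :=
  exist _ (fun j => Gamma (Eqf (var i) (var j))) (ex_intro _ i eq_refl).

Lemma cls_eq i j : cls i = cls j <-> Gamma (Eqf (var i) (var j)).
Proof.
  split.
  - intro H. change (proj1_sig (cls i) j). rewrite H. apply Gamma_eqf_refl.
  - intro H. unfold cls.
    assert (E : (fun k => Gamma (Eqf (var i) (var k))) = (fun k => Gamma (Eqf (var j) (var k)))).
    { apply functional_extensionality; intro k. apply propositional_extensionality.
      split; intro; eauto using Gamma_eqf_trans, Gamma_eqf_sym. }
    generalize (ex_intro (fun i0 => (fun k => Gamma (Eqf (var i) (var k)))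
                                    = (fun j0 => Gamma (Eqf (var i0) (var j0)))) i eq_refl).
    rewrite E. intros. f_equal. apply proof_irrelevance.
Qed.

Definition rep (d : Dom) : nat := proj1_sig (constructive_indefinite_description _ (proj2_sig d)).

Lemma cls_rep d : cls (rep d) = d.
Proof.
  destruct d as [P HP]. unfold rep; simpl.
  destruct (constructive_indefinite_description _ HP) as [i Hi]; simpl.
  subst P. unfold cls. f_equal. apply proof_irrelevance.
Qed.

Lemma Gamma_rep i : Gamma (Eqf (var (rep (cls i))) (var i)).
Proof. apply cls_eq. apply cls_rep. Qed.

Lemma Gamma_app_named f (js : Fin.t (farity L f) -> nat) :
  exists w, Gamma (Eqf (var w) (Defs.app f (fun k => var (js k)))).
Proof.
  set (p := neg (Eqf (var 0) (Defs.app f (fun k => var (S (js k)))))).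
  assert (H : Gamma (neg (All p))).
  { apply (Gamma_closed []); [intros _ []|].
    intros M s _ _ H. apply (H (finterp M f (fun k => s (js k)))). reflexivity. }
  destruct (Gamma_henkin _ H) as [w Hw]. exists w.
  apply (Gamma_closed [neg (frename (scons w (fun v => v)) p)]); [intros x [<-|[]]; auto|].
  intros M s _ Hs. specialize (Hs _ (or_introl eq_refl)). simpl in *. apply NNPP. auto.
Qed.

Definition term_fun (f : func L) (v : Fin.t (farity L f) -> Dom) : Dom :=
  cls (epsilon (inhabits 0)
         (fun w => Gamma (Eqf (var w) (Defs.app f (fun k => var (rep (v k))))))).

Definition term_rel (r : rel L) (v : Fin.t (rarity L r) -> Dom) : Prop :=
  Gamma (Relf r (fun k => var (rep (v k)))).

Definition term_model : structure L :=
  {| dom := Dom; dom_inh := inhabits (cls 0); finterp := term_fun; rinterp := term_rel |}.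

Lemma teval_term_model (t : term L) : forall sg : nat -> nat,
  exists j, teval term_model (fun i => cls (sg i)) t = cls j /\ Gamma (Eqf (var j) (trename sg t)).
Proof.
  induction t as [i|f args IH]; intros sg.
  - exists (sg i). split; auto. apply Gamma_eqf_refl.
  - destruct (choice (fun k j => teval term_model (fun i => cls (sg i)) (args k) = cls j /\
        Gamma (Eqf (var j) (trename sg (args k))))) as [js Hjs]; [intro k; apply IH|].
    simpl. replace (fun j => teval term_model (fun i => cls (sg i)) (args j))
      with (fun k => cls (js k)) by (apply functional_extensionality; intro k; symmetry; apply Hjs).
    unfold term_fun. set (w := epsilon _ _).
    assert (Hw : Gamma (Eqf (var w) (Defs.app f (fun k => var (rep (cls (js k))))))).
    { apply (epsilon_spec (inhabits 0)
        (fun w => Gamma (Eqf (var w) (Defs.app f (fun k => var (rep (cls (js k)))))))).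
      apply Gamma_app_named. }
    exists w. split; auto. apply (Gamma_eqf_trans _ _ _ Hw). apply Gamma_app_congr.
    intro k. apply (Gamma_eqf_trans _ _ _ (Gamma_rep (js k))). apply Hjs.
Qed.

Lemma term_model_truth (phi : formula L) : forall sg : nat -> nat,
  sat term_model (fun i => cls (sg i)) phi <-> Gamma (frename sg phi).
Proof.
  induction phi as [t1 t2|r args| |p IHp q IHq|p IHp]; intros sg; simpl.
  - destruct (teval_term_model t1 sg) as [j1 [-> G1]].
    destruct (teval_term_model t2 sg) as [j2 [-> G2]].
    rewrite cls_eq. split; intro H; eauto 6 using Gamma_eqf_trans, Gamma_eqf_sym.
  - destruct (choice (fun k j => teval term_model (fun i => cls (sg i)) (args k) = cls j /\
        Gamma (Eqf (var j) (trename sg (args k))))) as [js Hjs];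
      [intro k; apply teval_term_model|].
    replace (fun j => teval term_model (fun i => cls (sg i)) (args j))
      with (fun k => cls (js k)) by (apply functional_extensionality; intro k; symmetry; apply Hjs).
    assert (Hk : forall k, Gamma (Eqf (var (rep (cls (js k)))) (trename sg (args k)))).
    { intro k. apply (Gamma_eqf_trans _ _ _ (Gamma_rep (js k))). apply Hjs. }
    unfold term_rel. split; apply Gamma_rel_congr; auto using Gamma_eqf_sym.
  - split; [tauto|]. apply Gamma_Fls.
  - rewrite Gamma_imp, IHp, IHq. tauto.
  - rewrite Gamma_all.
    assert (E : forall j, frename (scons j (fun v => v)) (frename (uprn sg) p)
                          = frename (scons j sg) p).
    { intro j. rewrite frename_comp. f_equal. apply functional_extensionality.
      intros [|v]; reflexivity. }
    assert (E2 : forall j, scons (cls j) (fun i => cls (sg i)) = (fun i => cls (scons j sg i)))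
      by (intro j; apply functional_extensionality; intros [|v]; reflexivity).
    split; intros H j.
    + rewrite E, <- IHp, <- E2. apply H.
    + rewrite <- (cls_rep j), E2, IHp, <- E. apply H.
Qed.

Lemma term_model_model : model T term_model.
Proof.
  intros sg0 Hsg s. rewrite (functional_extensionality s (fun i => cls (rep (s i))))
    by (intro; rewrite cls_rep; auto).
  apply term_model_truth. apply (Gamma_closed []); [intros _ []|].
  intros M s' HM _. apply sat_rename. apply HM. auto.
Qed.

Lemma term_model_Sig phi : Sig phi -> sat term_model (fun i => cls (dbl i)) phi.
Proof. intro H. apply term_model_truth. left. exists phi. auto. Qed.

End Henkin.

Theorem compactness {L : language} (HL : countable_language L) (T : theory L)
  (Sig : formula L -> Prop) : fin_sat T Sig ->
  exists (M : structure L) (s : nat -> M), model T M /\ forall psi, Sig psi -> sat M s psi.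
Proof.
  intro F. destruct (formula_enumeration HL) as [en Hen].
  exists (term_model T en Sig), (fun i => cls T en Sig (dbl i)). split.
  - apply (term_model_model T en Hen Sig F).
  - apply (term_model_Sig T en Hen Sig F).
Qed.

Lemma compactness_cover {L : language} (HL : countable_language L) (T : theory L)
  {A} (Q : formula L -> Prop) (P : A -> Prop) (f : A -> formula L) :
  (forall (M : structure L) (s : nat -> M), model T M -> (forall psi, Q psi -> sat M s psi) ->
     exists x, P x /\ sat M s (f x)) ->
  exists l, (forall x, In x l -> P x) /\
    forall (M : structure L) (s : nat -> M), model T M -> (forall psi, Q psi -> sat M s psi) ->
      exists x, In x l /\ sat M s (f x).
Proof.
  intro Hcov. apply NNPP. intro Nl.
  destruct (compactness HL T (fun psi => Q psi \/ exists x, P x /\ psi = neg (f x)))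
    as [M [s [HM Hs]]].
  - intros l Hl. apply NNPP. intro Nsat. apply Nl.
    destruct (split_list (fun psi => exists x, P x /\ psi = neg (f x)) Q l)
      as [lf [Hlf Hlf']]; [intros psi Hp; destruct (Hl psi Hp); auto|].
    destruct (list_preimage P (fun x => neg (f x)) lf Hlf) as [l' [Hl'P Hl']].
    exists l'. split; auto. intros M s HM HQ. apply NNPP. intro N. apply Nsat.
    exists M, s. split; auto. intros psi Hp. destruct (Hlf' psi Hp) as [I|Qp]; auto.
    destruct (Hl' psi I) as [x [Ix ->]]. intro X. apply N. eauto.
  - destruct (Hcov M s HM) as [x [Px Hx]]; [intros; apply Hs; auto|].
    exact (Hs (neg (f x)) (or_intror (ex_intro _ x (conj Px eq_refl))) Hx).
Qed.

(** * Realisations of D_Φ *)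

Lemma same_entries_refl {X} (a : nat -> X) : same_entries a a.
Proof. split; intro i; exists i; auto. Qed.

Lemma same_entries_sym {X} (a b : nat -> X) : same_entries a b -> same_entries b a.
Proof. intros [H1 H2]. split; auto. Qed.

Lemma same_entries_trans {X} (a b c : nat -> X) :
  same_entries a b -> same_entries b c -> same_entries a c.
Proof.
  intros [H1 H2] [H3 H4]. split.
  - intro i. destruct (H1 i) as [j Hj]. destruct (H3 j) as [k Hk]. exists k; congruence.
  - intro i. destruct (H4 i) as [j Hj]. destruct (H2 j) as [k Hk]. exists k; congruence.
Qed.

Lemma same_entries_reindex {X} (a b : nat -> X) :
  same_entries a b -> exists sg, b = fun i => a (sg i).
Proof.
  intros [_ H]. destruct (choice (fun j i => b j = a i) H) as [sg Hsg].
  exists sg. apply functional_extensionality; auto.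
Qed.

Fixpoint maxto (K : nat) (f : nat -> nat) : nat :=
  match K with 0 => 0 | S K => Nat.max (f K) (maxto K f) end.

Lemma maxto_ge K f v : v < K -> f v <= maxto K f.
Proof.
  induction K; simpl; intros; [lia|].
  destruct (Nat.eq_dec v K); subst; [lia|]. specialize (IHK ltac:(lia)); lia.
Qed.

Section Realisations.
Context {L : language} (Phi : nat -> formula L) (HPhi : seq_ok Phi) (Hrich : rich Phi).

Definition D_cond (M : structure L) (k : nat) (x : nat -> M) : Prop :=
  forall y, sat M (upd x k y) (Phi k) -> sat M x (Phi k).

(* Under one binder, [frename (bind_at k)] turns x_k into the bound variable y. *)
Definition bind_at (k v : nat) : nat := if Nat.eqb v k then 0 else S v.

Definition D_formula (k : nat) : formula L :=
  All (Imp (frename (bind_at k) (Phi k)) (frename S (Phi k))).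

Lemma sat_D_formula (M : structure L) x k : sat M x (D_formula k) <-> D_cond M k x.
Proof.
  unfold D_formula, D_cond. simpl.
  assert (Hb : forall y, sat M (scons y x) (frename (bind_at k) (Phi k)) <->
                         sat M (upd x k y) (Phi k)).
  { intro y. apply sat_rename_eq. intro v. unfold bind_at, upd. destruct (Nat.eqb v k); auto. }
  assert (Hs : forall y, sat M (scons y x) (frename S (Phi k)) <-> sat M x (Phi k))
    by (intro y; apply sat_rename_eq; auto).
  split; intros H y; specialize (H y); rewrite Hb, Hs in *; auto.
Qed.

Lemma DPhi_iff (M : structure L) a : DPhi Phi M a <-> forall k, sat M a (D_formula k).
Proof. unfold DPhi. split; intros H k; apply sat_D_formula; exact (H k). Qed.

Lemma ffvb_D_formula k : ffvb (S k) (D_formula k).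
Proof.
  unfold D_formula. simpl. split.
  - apply (ffvb_rename _ (S k)); [apply HPhi|]. intros v Hv. unfold bind_at.
    destruct (Nat.eqb_spec v k); lia.
  - apply (ffvb_rename _ (S k)); [apply HPhi|]. intros; lia.
Qed.

Lemma D_cond_coinc (M : structure L) k (x x' : nat -> M) :
  (forall v, v <= k -> x v = x' v) -> (D_cond M k x <-> D_cond M k x').
Proof.
  intro H. rewrite <- !sat_D_formula. apply (sat_coinc M _ (S k)); [apply ffvb_D_formula|].
  intros; apply H; lia.
Qed.

(* The Tarski–Vaught condition for the set Sx. *)
Definition witness_closed (M : structure L) (Sx : M -> Prop) : Prop :=
  forall (psi : formula L) (s : nat -> M), (forall v, Sx (s v)) ->
    (exists y, sat M (scons y s) psi) -> exists y, Sx y /\ sat M (scons y s) psi.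

(* Rename psi(y, s) into a formula of y at position B and of entries of c
   below B; by richness it is some φ_n with dummy variables, and the D_Φ
   condition at n provides the witness c n. *)
Lemma entries_witness_closed (M : structure L) (c : nat -> M) :
  DPhi Phi M c -> witness_closed M (fun m => exists i, c i = m).
Proof.
  intros Hc psi s Hs [y0 Hy0].
  destruct (choice (fun v i => c i = s v) Hs) as [idx Hidx].
  set (K := ffv psi). set (B := S (maxto K idx)).
  set (rho := fun v => match v with 0 => B | S w => idx w end).
  assert (Hf : ffvb (S B) (frename rho psi)).
  { apply (ffvb_rename psi K); [apply ffv_ok|]. intros [|w] Hw; simpl; [lia|].
    pose proof (maxto_ge K idx w ltac:(lia)). unfold B. lia. }
  destruct (Hrich B _ Hf) as [n [HBn Hn]].
  assert (Key : forall y, sat M (upd c n y) (Phi n) <-> sat M (scons y s) psi).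
  { intro y. rewrite Hn, !sat_rename. apply (sat_coinc M psi K); [apply ffv_ok|].
    intros [|w] Hw; simpl.
    - unfold move_var. rewrite Nat.eqb_refl. unfold upd. rewrite Nat.eqb_refl. auto.
    - pose proof (maxto_ge K idx w ltac:(lia)).
      unfold move_var. destruct (Nat.eqb_spec (idx w) B); [unfold B in *; lia|].
      unfold upd. destruct (Nat.eqb_spec (idx w) n); [unfold B in *; lia|]. auto. }
  exists (c n). split; [eauto|].
  apply Key. replace (upd c n (c n)) with c.
  - apply (Hc n y0). apply Key. auto.
  - apply functional_extensionality; intro v; unfold upd. destruct (Nat.eqb_spec v n); subst; auto.
Qed.

Lemma witness_closed_step (M : structure L) (Sx : M -> Prop) d :
  witness_closed M Sx -> Sx d ->
  forall k (x : nat -> M), (forall i, i < k -> Sx (x i)) ->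
    (exists y, sat M (upd x k y) (Phi k)) -> exists y, Sx y /\ sat M (upd x k y) (Phi k).
Proof.
  intros HW Hd k x Hx [y0 Hy0].
  set (x' := fun v => if Nat.ltb v k then x v else d).
  assert (E : forall y, sat M (upd x k y) (Phi k)
                        <-> sat M (scons y x') (frename (bind_at k) (Phi k))).
  { intro y. rewrite sat_rename. apply (sat_coinc M _ (S k)); [apply HPhi|].
    intros v Hv. unfold upd, bind_at. destruct (Nat.eqb_spec v k); simpl; auto.
    unfold x'. destruct (Nat.ltb_spec v k); auto; lia. }
  destruct (HW (frename (bind_at k) (Phi k)) x') as [y [Sy Hy]].
  { intro v. unfold x'. destruct (Nat.ltb_spec v k); auto. }
  { exists y0. apply E. auto. }
  exists y. split; auto. apply E; auto.
Qed.

Lemma rich_trivial_index K : exists k, K <= k /\ Phi k = Eqf (var k) (var k).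
Proof.
  destruct (Hrich K (Eqf (var K) (var K))) as [k [Hk E]]; [simpl; lia|].
  exists k. split; auto. rewrite E. simpl. unfold move_var. rewrite Nat.eqb_refl. auto.
Qed.

Section Construction.
Context (M : structure L) (Sx : M -> Prop)
  (HW : forall k (x : nat -> M), (forall i, i < k -> Sx (x i)) ->
     (exists y, sat M (upd x k y) (Phi k)) -> exists y, Sx y /\ sat M (upd x k y) (Phi k))
  (n : nat) (p e : nat -> M) (He : forall i, Sx (e i)) (Hp : forall i, i < n -> Sx (p i))
  (Hpc : forall k, k < n -> D_cond M k p).

(* Positions below n copy p.  At a later position k, if φ_k has a witness but
   the next element e c of the enumeration is not one, a witness in Sx is
   placed; otherwise e c is placed and the counter c advances.  Positions where
   φ_k is x_k = x_k always advance it, so every e j is eventually placed. *)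
Definition next_entry (k : nat) (x : nat -> M) (c : nat) : M * nat :=
  if Nat.ltb k n then (p k, c)
  else if excluded_middle_informative
            ((exists y, sat M (upd x k y) (Phi k)) /\ ~ sat M (upd x k (e c)) (Phi k))
       then (epsilon (inhabits (e 0)) (fun y => Sx y /\ sat M (upd x k y) (Phi k)), c)
       else (e c, S c).

Fixpoint build (k : nat) : (nat -> M) * nat :=
  match k with
  | 0 => (fun _ => e 0, 0)
  | S k => let x := fst (build k) in let c := snd (build k) in
           (upd x k (fst (next_entry k x c)), snd (next_entry k x c))
  end.

Definition approx k := fst (build k).
Definition counter k := snd (build k).
Definition entry k := fst (next_entry k (approx k) (counter k)).
Definition built (i : nat) : M := approx (S i) i.

Lemma approx_S k : approx (S k) = upd (approx k) k (entry k).
Proof. reflexivity. Qed.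

Lemma counter_S k : counter (S k) = snd (next_entry k (approx k) (counter k)).
Proof. reflexivity. Qed.

Lemma approx_built i k : i < k -> approx k i = built i.
Proof.
  intro H. unfold built. induction H; auto. rewrite approx_S. unfold upd.
  destruct (Nat.eqb_spec i m); [lia|auto].
Qed.

Lemma built_entry k : built k = entry k.
Proof. unfold built. rewrite approx_S. unfold upd. rewrite Nat.eqb_refl. auto. Qed.

Lemma built_prefix i : i < n -> built i = p i.
Proof.
  intro H. rewrite built_entry. unfold entry, next_entry.
  destruct (Nat.ltb_spec i n); [auto|lia].
Qed.

Lemma entry_witness k : (exists y, sat M (upd (approx k) k y) (Phi k)) ->
  (forall i, i < k -> Sx (approx k i)) ->
  Sx (epsilon (inhabits (e 0)) (fun y => Sx y /\ sat M (upd (approx k) k y) (Phi k))) /\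
  sat M (upd (approx k) k
    (epsilon (inhabits (e 0)) (fun y => Sx y /\ sat M (upd (approx k) k y) (Phi k)))) (Phi k).
Proof.
  intros Hex Hx.
  apply (epsilon_spec (inhabits (e 0)) (fun y => Sx y /\ sat M (upd (approx k) k y) (Phi k))).
  apply HW; auto.
Qed.

Lemma approx_in k : forall i, i < k -> Sx (approx k i).
Proof.
  induction k; intros i Hi; [lia|].
  rewrite approx_S. unfold upd. destruct (Nat.eqb_spec i k); [subst|apply IHk; lia].
  unfold entry, next_entry. destruct (Nat.ltb_spec k n); [apply Hp; auto|].
  destruct excluded_middle_informative as [[Hex _]|_]; simpl; auto.
  apply entry_witness; auto.
Qed.

Lemma built_in i : Sx (built i).
Proof. unfold built. apply approx_in. lia. Qed.

Lemma built_D_cond k : D_cond M k built.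
Proof.
  apply (D_cond_coinc M k _ (approx (S k))); [intros v Hv; symmetry; apply approx_built; lia|].
  rewrite approx_S. unfold entry, next_entry.
  destruct (Nat.ltb_spec k n).
  - apply (D_cond_coinc M k _ p); [|apply Hpc; auto].
    intros v Hv. unfold upd. destruct (Nat.eqb_spec v k); subst; simpl; auto.
    rewrite approx_built by lia. apply built_prefix. lia.
  - destruct excluded_middle_informative as [[Hex _]|Hn]; simpl.
    + intros y _. apply entry_witness; auto. apply approx_in.
    + intros y Hy.
      replace (upd (upd (approx k) k (e (counter k))) k y) with (upd (approx k) k y) in Hy
        by (apply functional_extensionality; intro v; unfold upd; destruct (Nat.eqb v k); auto).
      apply NNPP. intro N. apply Hn. split; eauto.
Qed.

Lemma counter_step k : counter (S k) = counter k \/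
  (counter (S k) = S (counter k) /\ entry k = e (counter k)).
Proof.
  rewrite counter_S. unfold entry, next_entry. destruct (Nat.ltb_spec k n); simpl; auto.
  destruct excluded_middle_informative; simpl; auto.
Qed.

Lemma counter_trivial k : n <= k -> Phi k = Eqf (var k) (var k) ->
  counter (S k) = S (counter k).
Proof.
  intros H1 H2. rewrite counter_S. unfold next_entry. destruct (Nat.ltb_spec k n); [lia|].
  destruct excluded_middle_informative as [[_ N]|_]; simpl; auto.
  exfalso. apply N. rewrite H2. simpl. auto.
Qed.

Lemma counter_mono k k' : k <= k' -> counter k <= counter k'.
Proof. induction 1; auto. destruct (counter_step m) as [E|[E _]]; lia. Qed.

Lemma counter_unbounded c : exists k, c < counter k.
Proof.
  induction c as [|c [k0 Hk0]].
  - destruct (rich_trivial_index n) as [k [H1 H2]].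
    exists (S k). rewrite counter_trivial; auto. lia.
  - destruct (rich_trivial_index (n + k0)) as [k [H1 H2]].
    exists (S k). rewrite counter_trivial; [|lia|auto].
    pose proof (counter_mono k0 k ltac:(lia)). lia.
Qed.

Lemma built_covers j : exists i, built i = e j.
Proof.
  destruct (counter_unbounded j) as [k Hk].
  assert (exists k, counter k = j /\ counter (S k) = S j) as [k' [H1 H2]].
  { induction k; [unfold counter in Hk; simpl in Hk; lia|].
    destruct (Nat.lt_ge_cases j (counter k)) as [H|H]; auto.
    exists k. destruct (counter_step k) as [E|[E _]]; lia. }
  exists k'. rewrite built_entry.
  destruct (counter_step k') as [E|[E V]]; [lia|]. rewrite V, H1. auto.
Qed.

End Construction.

Lemma D_extension (M : structure L) (Sx : M -> Prop)
  (HW : forall k (x : nat -> M), (forall i, i < k -> Sx (x i)) ->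
     (exists y, sat M (upd x k y) (Phi k)) -> exists y, Sx y /\ sat M (upd x k y) (Phi k))
  (n : nat) (p e : nat -> M) (He : forall i, Sx (e i)) (Hp : forall i, i < n -> Sx (p i))
  (Hpc : forall k, k < n -> D_cond M k p) :
  exists a, (forall i, i < n -> a i = p i) /\ DPhi Phi M a /\ (forall i, Sx (a i)) /\
    (forall j, exists i, a i = e j).
Proof.
  exists (built M Sx n p e). split; [|split; [|split]].
  - intros; apply built_prefix; auto.
  - intro k. apply built_D_cond; auto.
  - intro i. apply built_in; auto.
  - intro j. apply built_covers; auto.
Qed.

Lemma D_extension_covering (M : structure L) n (p e : nat -> M) :
  (forall k, k < n -> D_cond M k p) ->
  exists a, (forall i, i < n -> a i = p i) /\ DPhi Phi M a /\ (forall j, exists i, a i = e j).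
Proof.
  intro Hpc. destruct (D_extension M (fun _ => True)) with (n := n) (p := p) (e := e)
    as [a [H1 [H2 [_ H4]]]]; auto.
  - intros k x _ [y Hy]; eauto.
  - exists a; auto.
Qed.

Lemma D_extension_within (M : structure L) (c : nat -> M) n (p : nat -> M) :
  DPhi Phi M c -> (forall i, i < n -> exists j, c j = p i) -> (forall k, k < n -> D_cond M k p) ->
  exists a, (forall i, i < n -> a i = p i) /\ DPhi Phi M a /\ same_entries a c.
Proof.
  intros Hc Hin Hpc.
  destruct (D_extension M (fun m => exists i, c i = m)) with (n := n) (p := p) (e := c)
    as [a [H1 [H2 [H3 H4]]]]; eauto.
  - intros k x Hx Hex. apply (witness_closed_step M _ (c 0)); eauto.
    apply entries_witness_closed; auto.
  - exists a. split; auto. split; auto. split.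
    + intro i. destruct (H3 i) as [j Hj]. exists j; auto.
    + intro j. destruct (H4 j) as [i Hi]. exists i; auto.
Qed.

Lemma D_extension3 (M : structure L) (a b c : nat -> M) n :
  DPhi Phi M a -> DPhi Phi M b -> DPhi Phi M c ->
  exists a' b' c', DPhi Phi M a' /\ DPhi Phi M b' /\ DPhi Phi M c' /\
    same_entries a' b' /\ same_entries b' c' /\
    (forall i, i < n -> a' i = a i /\ b' i = b i /\ c' i = c i).
Proof.
  intros Ha Hb Hc.
  destruct (D_extension_covering M 0 a (pr a (pr b c))) as [d [_ [Hd Hcov]]]; [intros; lia|].
  destruct (D_extension_within M d n a Hd) as [a' [A1 [A2 A3]]]; [|intros k _; exact (Ha k)|].
  { intros i _. destruct (Hcov (2 * i)) as [j Hj]. rewrite pr_even in Hj. eauto. }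
  destruct (D_extension_within M d n b Hd) as [b' [B1 [B2 B3]]]; [|intros k _; exact (Hb k)|].
  { intros i _. destruct (Hcov (2 * (2 * i) + 1)) as [j Hj]. rewrite pr_odd, pr_even in Hj. eauto. }
  destruct (D_extension_within M d n c Hd) as [c' [C1 [C2 C3]]]; [|intros k _; exact (Hc k)|].
  { intros i _. destruct (Hcov (2 * (2 * i + 1) + 1)) as [j Hj]. rewrite !pr_odd in Hj. eauto. }
  assert (Sa'b' : same_entries a' b')
    by (eapply same_entries_trans; [eassumption|apply same_entries_sym; eassumption]).
  assert (Sb'c' : same_entries b' c')
    by (eapply same_entries_trans; [eassumption|apply same_entries_sym; eassumption]).
  exists a', b', c'. do 5 (split; [assumption|]). intros i Hi. auto.
Qed.

End Realisations.

(** * Transport along types *)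

Section Transport.
Context {L : language}.

Lemma eqty_tp2_fst (M M' : structure L) a b a' b' :
  eqty (tp2 M a b) (tp2 M' a' b') -> eqty (tp M a) (tp M' a').
Proof.
  intros H phi. unfold tp2, tp in *. specialize (H (frename (fun v => 2 * v) phi)).
  rewrite !sat_pr_even in H. exact H.
Qed.

Lemma eqty_tp_reindex (M M' : structure L) a a' rho phi :
  eqty (tp M a) (tp M' a') ->
  (sat M (fun v => a (rho v)) phi <-> sat M' (fun v => a' (rho v)) phi).
Proof. intro H. rewrite <- (sat_rename M), <- (sat_rename M'). apply H. Qed.

Lemma eqty_tp_pr (M M' : structure L) a a' s t phi :
  eqty (tp M a) (tp M' a') ->
  (sat M (pr (fun i => a (s i)) (fun i => a (t i))) phi <->
   sat M' (pr (fun i => a' (s i)) (fun i => a' (t i))) phi).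
Proof. intro H. rewrite !pr_comp. apply eqty_tp_reindex. exact H. Qed.

Lemma eqty_tp_tp2 (M M' : structure L) a a' sg :
  eqty (tp M a) (tp M' a') ->
  eqty (tp2 M a (fun i => a (sg i))) (tp2 M' a' (fun i => a' (sg i))).
Proof. intros H phi. exact (eqty_tp_pr M M' a a' (fun i => i) sg phi H). Qed.

Lemma eqty_tp_eq (M M' : structure L) a a' i j :
  eqty (tp M a) (tp M' a') -> (a i = a j <-> a' i = a' j).
Proof. intro H. exact (H (Eqf (var i) (var j))). Qed.

Lemma eqty_tp2_reindex (M M' : structure L) a a' b' sg :
  eqty (tp2 M a (fun i => a (sg i))) (tp2 M' a' b') -> b' = (fun i => a' (sg i)).
Proof.
  intros H. apply functional_extensionality. intro i.
  specialize (H (Eqf (var (2 * i + 1)) (var (2 * sg i)))). unfold tp2, tp in H.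
  cbn [sat teval] in H. rewrite !pr_odd, !pr_even in H. apply H. reflexivity.
Qed.

Lemma eqty_tp_same_entries (M M' : structure L) a a' sg :
  eqty (tp M a) (tp M' a') -> same_entries a (fun i => a (sg i)) ->
  same_entries a' (fun i => a' (sg i)).
Proof.
  intros H S. split.
  - intro i. destruct (proj1 S i) as [j Hj]. exists j.
    apply (eqty_tp_eq M M' a a' i (sg j) H). auto.
  - intro j. exists (sg j). reflexivity.
Qed.

End Transport.

Section Groupoid.
Context {L : language} (T : theory L) (Phi : nat -> formula L).

Lemma Gpair_intro (M : structure L) a b : model T M -> DPhi Phi M a -> DPhi Phi M b ->
  same_entries a b -> Gpair T Phi M a b.
Proof. intros; split; [auto|split; [auto|split; auto]]. Qed.

Lemma Gpair_sym (M : structure L) a b : Gpair T Phi M a b -> Gpair T Phi M b a.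
Proof. intros [HM [Da [Db S]]]. apply Gpair_intro; auto. apply same_entries_sym; auto. Qed.

Lemma Gpair_trans (M : structure L) a b c :
  Gpair T Phi M a b -> Gpair T Phi M b c -> Gpair T Phi M a c.
Proof.
  intros [HM [Da [Db S1]]] [_ [_ [Dc S2]]]. apply Gpair_intro; auto.
  eapply same_entries_trans; eauto.
Qed.

Lemma Gpair_diag (M : structure L) a : model T M -> DPhi Phi M a -> Gpair T Phi M a a.
Proof. intros. apply Gpair_intro; auto. apply same_entries_refl. Qed.

Lemma Gpair_Gset (M : structure L) a b : Gpair T Phi M a b -> Gset T Phi (tp2 M a b).
Proof. intro H. exists M, a, b. split; auto. intro; tauto. Qed.

Lemma DPhi_eqty_tp (M M' : structure L) a a' sg :
  eqty (tp M a) (tp M' a') -> DPhi Phi M (fun i => a (sg i)) -> DPhi Phi M' (fun i => a' (sg i)).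
Proof.
  intros H D. apply DPhi_iff. intro k.
  apply (proj1 (eqty_tp_reindex M M' a a' sg (D_formula Phi k) H)).
  exact (proj1 (DPhi_iff Phi M _) D k).
Qed.

Lemma Gpair_eqty_tp (M M' : structure L) a a' sg : model T M' -> eqty (tp M a) (tp M' a') ->
  Gpair T Phi M a (fun i => a (sg i)) -> Gpair T Phi M' a' (fun i => a' (sg i)).
Proof.
  intros HM' H [_ [Da [Db S]]]. apply Gpair_intro; auto.
  - exact (DPhi_eqty_tp M M' a a' (fun i => i) H Da).
  - exact (DPhi_eqty_tp M M' a a' sg H Db).
  - exact (eqty_tp_same_entries M M' a a' sg H S).
Qed.

End Groupoid.

(** * From definable equivalence relations to 𝓗 *)

Section Bracket.
Context {L : language} (T : theory L) (Phi : nat -> formula L)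
  (E : formula L) (HE : def_equiv T Phi E).

Lemma bracket_clopen : G_clopen T Phi (bracket T Phi E).
Proof.
  split; split.
  - intros p [G _]; auto.
  - intros p [G Hp]. exists E. split; auto. intros q Gq Hq. split; auto.
  - intros p [G _]; auto.
  - intros p [G Hp]. exists (neg E). split.
    + destruct G as [M [a [b [Gp Heq]]]]. apply Heq. simpl. intro HE'.
      apply Hp. split; [exists M, a, b; auto|]. apply Heq. auto.
    + intros q Gq Hq. split; auto. intros [_ HqE].
      destruct Gq as [M [a [b [Gp Heq]]]]. apply Heq in Hq. apply Heq in HqE. exact (Hq HqE).
Qed.

Lemma bracket_HHinv k : bracket T Phi E k <-> HHinv T Phi (bracket T Phi E) k.
Proof.
  split.
  - intros [[M [a [b [Gab Heq]]]] Hk]. pose proof Gab as [HM [Da [Db _]]].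
    exists M, a, b, b. split; [exact Gab|]. split; [apply Gpair_diag; auto|].
    split; [split; [apply Gpair_Gset; auto|apply Heq; auto]|].
    split; [split; [apply Gpair_Gset, Gpair_diag; auto|apply (proj1 (HE M HM)); auto]|].
    exact Heq.
  - intros [M [a [b [c [Gab [Gcb [[_ Hab] [[_ Hcb] Heq]]]]]]]].
    assert (Gac : Gpair T Phi M a c) by (eapply Gpair_trans; [exact Gab|apply Gpair_sym; auto]).
    split; [exists M, a, c; auto|].
    destruct Gab as [HM [Da [Db _]]], Gcb as [_ [Dc _]].
    destruct (HE M HM) as [_ [Hsym Htrans]]. apply Heq. apply (Htrans a b c); auto.
Qed.

Lemma bracket_Hcal : Hcal T Phi (bracket T Phi E).
Proof.
  split; [apply bracket_clopen|split; [apply bracket_HHinv|]].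
  intros p [M [a [HM [Da Heq]]]]. split.
  - exists M, a, a. split; [apply Gpair_diag; auto|auto].
  - apply Heq. apply (proj1 (HE M HM)); auto.
Qed.

End Bracket.

Lemma bracket_injective {L : language} (T : theory L) (Phi : nat -> formula L)
  (HPhi : seq_ok Phi) (Hrich : rich Phi) E E' :
  (forall p, bracket T Phi E p <-> bracket T Phi E' p) -> agree_on_D T Phi E E'.
Proof.
  intros Hb M HM a b Da Db. set (N := ffv E + ffv E').
  destruct (D_extension3 Phi HPhi Hrich M a b b N Da Db Db)
    as [a' [b' [c' [Da' [Db' [_ [Sab [_ Hpre]]]]]]]].
  assert (Hp : forall i, i < N -> a i = a' i /\ b i = b' i)
    by (intros i Hi; destruct (Hpre i Hi) as [H1 [H2 _]]; auto).
  rewrite (sat_pr_prefix M a b a' b' N E Hp), (sat_pr_prefix M a b a' b' N E' Hp)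
    by (apply ffvb_pr; unfold N; lia).
  assert (G : Gset T Phi (tp2 M a' b')) by (apply Gpair_Gset, Gpair_intro; auto).
  split; intro H.
  - exact (proj2 (proj1 (Hb _) (conj G H))).
  - exact (proj2 (proj2 (Hb _) (conj G H))).
Qed.

(** * Cosets *)

Section Cosets.
Context {L : language} (T : theory L) (Phi : nat -> formula L)
  (E : formula L) (HE : def_equiv T Phi E).

Lemma E_sym (M : structure L) a b : Gpair T Phi M a b -> sat M (pr a b) E -> sat M (pr b a) E.
Proof. intros [HM [Da [Db _]]]. apply (HE M HM); auto. Qed.

Lemma coset_refl (M : structure L) (a b : nat -> M) :
  Gpair T Phi M a b -> coset T Phi (tp2 M a b) (bracket T Phi E) (tp2 M a b).
Proof.
  intro G. pose proof G as [HM [_ [Db _]]].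
  exists M, a, b, b. split; [auto|]. split; [apply Gpair_diag; auto|].
  split; [intro; tauto|]. split; [|intro; tauto].
  split; [apply Gpair_Gset, Gpair_diag; auto|]. apply (proj1 (HE M HM)); auto.
Qed.

(* An element tp(a1,c1) of tp(a, a∘σ)H is also in tp(a, a∘σ')H, through
   a1∘σ', because E(a∘σ', a∘σ) transports to E(a1∘σ', a1∘σ). *)
Lemma coset_incl (M : structure L) (a : nat -> M) sg sg' :
  Gpair T Phi M a (fun i => a (sg i)) -> Gpair T Phi M a (fun i => a (sg' i)) ->
  sat M (pr (fun i => a (sg' i)) (fun i => a (sg i))) E ->
  forall k, coset T Phi (tp2 M a (fun i => a (sg i))) (bracket T Phi E) k ->
            coset T Phi (tp2 M a (fun i => a (sg' i))) (bracket T Phi E) k.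
Proof.
  intros Gab Gab' Hbb' k [M1 [a1 [b1 [c1 [G1 [G2 [Heq1 [[_ Hbc] Heqk]]]]]]]].
  pose proof (eqty_tp2_fst M M1 _ _ _ _ Heq1) as Htp.
  pose proof (eqty_tp2_reindex M M1 a a1 b1 sg Heq1) as ->.
  pose proof G1 as [HM1 _].
  assert (G1' : Gpair T Phi M1 a1 (fun i => a1 (sg' i)))
    by (apply (Gpair_eqty_tp T Phi M M1 a a1 sg'); auto).
  assert (G2' : Gpair T Phi M1 (fun i => a1 (sg' i)) c1).
  { apply (Gpair_trans T Phi M1 _ a1); [apply Gpair_sym; exact G1'|].
    apply (Gpair_trans T Phi M1 _ (fun i => a1 (sg i))); assumption. }
  exists M1, a1, (fun i => a1 (sg' i)), c1.
  do 2 (split; [assumption|]). split; [apply eqty_tp_tp2; auto|]. split; [|exact Heqk].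
  split; [apply Gpair_Gset; auto|].
  destruct (HE M1 HM1) as [_ [_ Htrans]]. pose proof G2' as [_ [Db2 [Dc1 _]]].
  apply (Htrans _ (fun i => a1 (sg i)) c1); auto; [apply G2|].
  apply (eqty_tp_pr M M1 a a1 sg' sg E Htp). auto.
Qed.

Lemma coset_eq_iff (M : structure L) (a b b' : nat -> M) :
  Gpair T Phi M a b -> Gpair T Phi M a b' ->
  ((forall k, coset T Phi (tp2 M a b) (bracket T Phi E) k <->
              coset T Phi (tp2 M a b') (bracket T Phi E) k)
   <-> sat M (pr b b') E).
Proof.
  intros Gab Gab'.
  destruct (same_entries_reindex a b (proj2 (proj2 (proj2 Gab)))) as [sg ->].
  destruct (same_entries_reindex a b' (proj2 (proj2 (proj2 Gab')))) as [sg' ->].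
  split.
  - intro H. destruct (proj2 (H _) (coset_refl M a _ Gab'))
      as [M1 [a1 [b1 [c1 [G1 [G2 [Heq1 [[_ Hbc] Heqk]]]]]]]].
    pose proof (eqty_tp2_fst M M1 _ _ _ _ Heq1) as Htp.
    pose proof (eqty_tp2_reindex M M1 a a1 b1 sg Heq1) as ->.
    pose proof (eqty_tp2_reindex M M1 a a1 c1 sg' Heqk) as ->.
    apply (eqty_tp_pr M M1 a a1 sg sg' E Htp). auto.
  - intros H k. split; apply coset_incl; auto. apply E_sym; auto.
    eapply Gpair_trans; [apply Gpair_sym|]; eauto.
Qed.

End Cosets.

Lemma coset_eqty {L : language} (T : theory L) (Phi : nat -> formula L) (g g' : ty L) H k :
  eqty g g' -> coset T Phi g H k -> coset T Phi g' H k.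
Proof.
  intros E [M1 [a1 [b1 [c1 [G1 [G2 [Heq1 R]]]]]]].
  exists M1, a1, b1, c1. do 2 (split; auto). split; auto.
  intro phi. split; intro X; [apply Heq1, E, X|apply E, Heq1, X].
Qed.

Lemma eGmodH_coset {L : language} (T : theory L) (Phi : nat -> formula L) H
  (M : structure L) (a : nat -> M) : model T M ->
  forall C, eGmodH T Phi (tp M a) H C ->
    exists b : nat -> M, Gpair T Phi M a b /\ (forall k, C k <-> coset T Phi (tp2 M a b) H k).
Proof.
  intros HM C [M1 [a1 [b1 [G1 [Htp HC]]]]].
  destruct (same_entries_reindex a1 b1 (proj2 (proj2 (proj2 G1)))) as [sg ->].
  exists (fun i => a (sg i)). split; [apply (Gpair_eqty_tp T Phi M1 M a1 a sg); auto|].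
  intro k. rewrite HC. split; apply coset_eqty; apply eqty_tp_tp2; auto.
  intro phi. symmetry. apply Htp.
Qed.

Lemma E_class_Gpair {L : language} (T : theory L) (Phi : nat -> formula L)
  (HPhi : seq_ok Phi) (Hrich : rich Phi) E (HE : def_equiv T Phi E)
  (M : structure L) (a : nat -> M) :
  model T M -> DPhi Phi M a -> (forall m : M, exists i, a i = m) ->
  forall b' : nat -> M, DPhi Phi M b' ->
    exists b : nat -> M, Gpair T Phi M a b /\ sat M (pr b b') E.
Proof.
  intros HM Da Hon b' Db'.
  destruct (D_extension_within Phi HPhi Hrich M a (ffv E) b' Da) as [b [H1 [H2 H3]]];
    [intros i _; apply Hon|intros k _; exact (Db' k)|].
  exists b. split; [apply Gpair_intro; auto; apply same_entries_sym; auto|].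
  apply (sat_pr_prefix M b b' b' b' (ffv E) E); [intros i Hi; split; auto|apply ffvb_pr; lia|].
  apply (proj1 (HE M HM)); auto.
Qed.

(** * From 𝓗 to definable equivalence relations *)

Section ExistentialBlocks.
Context {L : language}.

Fixpoint Exn (K : nat) (p : formula L) : formula L :=
  match K with 0 => p | S K => Ex (Exn K p) end.

Definition glue {X} (K : nat) (t s : nat -> X) (v : nat) : X :=
  if Nat.ltb v K then t v else s (v - K).

Lemma glue0 {X} (t s : nat -> X) : glue 0 t s = s.
Proof. apply functional_extensionality; intro v. unfold glue. simpl. f_equal; lia. Qed.

Lemma glueS {X} K (t s : nat -> X) m :
  glue K t (scons m s) = glue (S K) (fun v => if Nat.ltb v K then t v else m) s.
Proof.
  apply functional_extensionality; intro v. unfold glue.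
  destruct (Nat.ltb_spec v K); destruct (Nat.ltb_spec v (S K)); try lia; auto.
  - replace v with K by lia. rewrite Nat.sub_diag. reflexivity.
  - replace (v - K) with (S (v - S K)) by lia. reflexivity.
Qed.

Lemma glue_ext {X} K (t t' s : nat -> X) :
  (forall v, v < K -> t v = t' v) -> glue K t s = glue K t' s.
Proof.
  intro H. apply functional_extensionality; intro v. unfold glue.
  destruct (Nat.ltb_spec v K); auto.
Qed.

Lemma sat_Exn (M : structure L) K p : forall s,
  sat M s (Exn K p) <-> exists t, sat M (glue K t s) p.
Proof.
  induction K; intro s; simpl Exn.
  - split; [intro H; exists s|intros [t H]]; rewrite glue0 in *; auto.
  - rewrite sat_Ex. split.
    + intros [m Hm]. apply IHK in Hm as [t Ht]. rewrite glueS in Ht. eauto.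
    + intros [t Ht]. exists (t K). apply IHK. exists t. rewrite glueS.
      erewrite glue_ext; [exact Ht|]. intros v Hv. destruct (Nat.ltb_spec v K); auto.
      f_equal; lia.
Qed.

Lemma Exn_witness_closed (M : structure L) (Sx : M -> Prop) (HW : witness_closed M Sx) K p :
  forall s, (forall v, Sx (s v)) -> sat M s (Exn K p) ->
    exists t, (forall v, Sx (t v)) /\ sat M (glue K t s) p.
Proof.
  induction K; intros s Hs H; simpl Exn in H.
  - exists s. rewrite glue0. auto.
  - apply sat_Ex in H. destruct (HW _ s Hs H) as [m [Sm Hm]].
    destruct (IHK (scons m s)) as [t [St Ht]]; [intros [|v]; simpl; auto|auto|].
    exists (fun v => if Nat.ltb v K then t v else m). split.
    + intro v. destruct (Nat.ltb v K); auto.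
    + rewrite <- glueS. auto.
Qed.

Lemma ffvb_Exn K : forall m p, ffvb (m + K) p -> ffvb m (Exn K p).
Proof.
  induction K; intros m p H; simpl.
  - rewrite Nat.add_0_r in H. auto.
  - repeat split. apply IHK. replace (S m + K) with (m + S K) by lia. auto.
Qed.

End ExistentialBlocks.

Section Surjectivity.
Context {L : language} (T : theory L) (Phi : nat -> formula L) (HPhi : seq_ok Phi)
  (Hrich : rich Phi) (HL : countable_language L) (H : ty L -> Prop) (HH : Hcal T Phi H).

Lemma H_Gset p : H p -> Gset T Phi p.
Proof. destruct HH as [[[HG _] _] _]. auto. Qed.

Lemma H_open p : H p -> exists phi, p phi /\ forall q, Gset T Phi q -> q phi -> H q.
Proof. destruct HH as [[[_ Hop] _] _]. auto. Qed.

Lemma H_compl_open p : Gset T Phi p -> ~ H p ->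
  exists phi, p phi /\ forall q, Gset T Phi q -> q phi -> ~ H q.
Proof.
  destruct HH as [[_ [_ Hcop]] _]. intros G N. destruct (Hcop p (conj G N)) as [phi [Hp Hq]].
  exists phi. split; auto. intros q Gq Hq'. apply (Hq q Gq Hq').
Qed.

Lemma H_eqty p q : H p -> Gset T Phi q -> eqty p q -> H q.
Proof. intros Hp Gq E. destruct (H_open p Hp) as [phi [P O]]. apply O; auto. apply E; auto. Qed.

Lemma H_diag (M : structure L) a : model T M -> DPhi Phi M a -> H (tp2 M a a).
Proof.
  destruct HH as [_ [_ HB]]. intros HM Da. apply HB. exists M, a. split; auto. split; auto.
  intro; tauto.
Qed.

Lemma H_sym (M : structure L) a b : Gpair T Phi M a b -> H (tp2 M a b) -> H (tp2 M b a).
Proof.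
  destruct HH as [_ [HHi _]]. intros G Hab. pose proof G as [HM [Da [Db S]]]. apply HHi.
  exists M, b, b, a. split; [apply Gpair_diag; auto|]. split; [auto|].
  split; [apply H_diag; auto|]. split; auto. intro; tauto.
Qed.

Lemma H_trans (M : structure L) a b c : Gpair T Phi M a b -> Gpair T Phi M b c ->
  H (tp2 M a b) -> H (tp2 M b c) -> H (tp2 M a c).
Proof.
  destruct HH as [_ [HHi _]]. intros Gab Gbc Hab Hbc. apply HHi.
  exists M, a, b, c. do 2 (split; [auto using Gpair_sym|]).
  split; auto. split; [apply H_sym; auto|]. intro; tauto.
Qed.

Definition openH (phi : formula L) : Prop := forall q, Gset T Phi q -> q phi -> H q.
Definition openC (phi : formula L) : Prop := forall q, Gset T Phi q -> q phi -> ~ H q.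

(* B ⊆ H and H is open, so D_Φ(x) implies a disjunction of basic open sets
   [φ(x,x)] ⊆ H; compactness makes it finite, and N bounds its variables. *)
Lemma H_prefix_nbhd : exists N, forall (M : structure L) a b, Gpair T Phi M a b ->
  (forall i, i < N -> a i = b i) -> H (tp2 M a b).
Proof.
  destruct (compactness_cover HL T (fun psi => exists k, psi = D_formula Phi k)
              openH (frename Nat.div2)) as [l [Hl Hcov]].
  - intros M s HM Hs. assert (Ds : DPhi Phi M s) by (apply DPhi_iff; intro k; apply Hs; eauto).
    destruct (H_open _ (H_diag M s HM Ds)) as [phi [Hp Ho]].
    exists phi. split; [exact Ho|]. rewrite sat_rename, <- pr_diag. exact Hp.
  - exists (ffv_list l). intros M a b G Hpre. pose proof G as [HM [Da _]].
    destruct (Hcov M a HM) as [phi [Il Hphi]]; [intros psi [k ->]; apply DPhi_iff; auto|].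
    apply (Hl phi Il); [apply Gpair_Gset; auto|]. unfold tp2, tp.
    rewrite sat_rename, <- pr_diag in Hphi.
    apply (sat_pr_prefix M a a a b (ffv_list l) phi); auto.
    apply ffvb_pr. apply ffv_list_ge. auto.
Qed.

Section PrefixDetermined.
Variable N0 : nat.
Hypothesis H_prefix : forall (M : structure L) a b, Gpair T Phi M a b ->
  (forall i, i < N0 -> a i = b i) -> H (tp2 M a b).

Lemma H_prefix_invariant (M : structure L) (a b a' b' : nat -> M) :
  Gpair T Phi M a b -> Gpair T Phi M a' b' -> same_entries a a' ->
  (forall i, i < N0 -> a i = a' i /\ b i = b' i) -> (H (tp2 M a b) <-> H (tp2 M a' b')).
Proof.
  intros Gab Ga'b' S Hp. pose proof Gab as [HM [Da _]]. pose proof Ga'b' as [_ [Da' _]].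
  assert (Gaa' : Gpair T Phi M a a') by (apply Gpair_intro; auto).
  assert (Gbb' : Gpair T Phi M b b')
    by (apply (Gpair_trans T Phi M _ a); [apply Gpair_sym|apply (Gpair_trans T Phi M _ a')]; auto).
  assert (Haa' : H (tp2 M a a')) by (apply H_prefix; auto; apply Hp).
  assert (Hbb' : H (tp2 M b b')) by (apply H_prefix; auto; apply Hp).
  split; intro X.
  - apply (H_trans M a' a b'); auto using Gpair_sym, H_sym.
    + apply (Gpair_trans T Phi M _ b); auto.
    + apply (H_trans M a b b'); auto.
  - apply (H_trans M a a' b); auto.
    + apply (Gpair_trans T Phi M _ b'); auto using Gpair_sym.
    + apply (H_trans M a' b' b); auto using Gpair_sym, H_sym.
Qed.

Fixpoint D_pair (n : nat) : formula L :=
  match n with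
  | 0 => neg Fls
  | S n => And (D_pair n)
             (And (frename (fun v => 2 * v) (D_formula Phi n))
                  (frename (fun v => 2 * v + 1) (D_formula Phi n)))
  end.

Lemma sat_D_pair (M : structure L) (a b : nat -> M) n :
  sat M (pr a b) (D_pair n) <-> forall k, k < n -> D_cond Phi M k a /\ D_cond Phi M k b.
Proof.
  induction n.
  - simpl. split; [intros _ k Hk; lia|tauto].
  - cbn [D_pair]. rewrite !sat_And, IHn, sat_pr_even, sat_pr_odd, !sat_D_formula.
    split.
    + intros [H1 [H2 H3]] k Hk. destruct (Nat.eq_dec k n); [subst; auto|apply H1; lia].
    + intro X. split; [intros; apply X; lia|apply X; lia].
Qed.

Lemma ffvb_D_pair n : ffvb (2 * n) (D_pair n).
Proof.
  induction n; [simpl; auto|]. cbn [D_pair].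
  apply ffvb_And; [|apply ffvb_And].
  - apply (ffvb_mono _ (2 * n)); auto; lia.
  - apply (ffvb_rename _ (S n)); [apply ffvb_D_formula; auto|]. intros; lia.
  - apply (ffvb_rename _ (S n)); [apply ffvb_D_formula; auto|]. intros; lia.
Qed.

(* [star phi], in the 2 N0 variables of the first N0 entries of a pair,
   says that the pair continues to a tuple satisfying phi and enough
   conjuncts of D_Φ on both sides.  The first 2 N0 variables of [body phi]
   become the free variables of [star phi] through [rho phi]; the others are
   bound by the block of [KK phi] existential quantifiers. *)
Definition nn (phi : formula L) := N0 + ffv phi.
Definition KK (phi : formula L) := 2 * ffv phi.
Definition rho (phi : formula L) (v : nat) :=
  if Nat.ltb v (2 * N0) then v + KK phi else v - 2 * N0.
Definition body (phi : formula L) := And phi (D_pair (nn phi)).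
Definition star (phi : formula L) := Exn (KK phi) (frename (rho phi) (body phi)).
Definition ext {X} (s t : nat -> X) (v : nat) := if Nat.ltb v (2 * N0) then s v else t (v - 2 * N0).

Lemma ffvb_body phi : ffvb (2 * nn phi) (body phi).
Proof. apply ffvb_And; [apply ffvb_pr; unfold nn; lia|apply ffvb_D_pair]. Qed.

Lemma ffvb_star phi : ffvb (2 * N0) (star phi).
Proof.
  apply ffvb_Exn. apply (ffvb_rename _ (2 * nn phi)); [apply ffvb_body|].
  intros v Hv. unfold rho, KK, nn in *. destruct (Nat.ltb_spec v (2 * N0)); lia.
Qed.

Lemma glue_rho {X} phi (t s : nat -> X) v :
  v < 2 * nn phi -> glue (KK phi) t s (rho phi v) = ext s t v.
Proof.
  intro Hv. unfold glue, rho, ext, KK, nn in *.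
  destruct (Nat.ltb_spec v (2 * N0)).
  - destruct (Nat.ltb_spec (v + 2 * ffv phi) (2 * ffv phi)); [lia|]. f_equal; lia.
  - destruct (Nat.ltb_spec (v - 2 * N0) (2 * ffv phi)); [auto|lia].
Qed.

Lemma sat_glue_body (M : structure L) (s t : nat -> M) phi :
  sat M (glue (KK phi) t s) (frename (rho phi) (body phi)) <-> sat M (ext s t) (body phi).
Proof.
  rewrite sat_rename. apply (sat_coinc M _ (2 * nn phi)); [apply ffvb_body|].
  intros v Hv. apply glue_rho; auto.
Qed.

Lemma star_of (M : structure L) (a b : nat -> M) phi :
  DPhi Phi M a -> DPhi Phi M b -> sat M (pr a b) phi -> sat M (pr a b) (star phi).
Proof.
  intros Da Db Hp. apply sat_Exn. exists (fun v => pr a b (v + 2 * N0)).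
  apply sat_glue_body.
  replace (ext (pr a b) (fun v => pr a b (v + 2 * N0))) with (pr a b).
  - apply sat_And. split; auto. apply sat_D_pair. intros k _. split; [exact (Da k)|exact (Db k)].
  - apply functional_extensionality; intro v. unfold ext.
    destruct (Nat.ltb_spec v (2 * N0)); auto. f_equal; lia.
Qed.

Definition split1 {X} (a t : nat -> X) (i : nat) := if Nat.ltb i N0 then a i else t (2 * (i - N0)).
Definition split2 {X} (b t : nat -> X) (i : nat) :=
  if Nat.ltb i N0 then b i else t (2 * (i - N0) + 1).

Lemma ext_pr {X} (a b t : nat -> X) : ext (pr a b) t = pr (split1 a t) (split2 b t).
Proof.
  rewrite (pr_halves (ext (pr a b) t)). f_equal; apply functional_extensionality; intro i;
    unfold ext, split1, split2.
  - destruct (Nat.ltb_spec (2 * i) (2 * N0)); destruct (Nat.ltb_spec i N0); try lia.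
    + apply pr_even.
    + f_equal; lia.
  - destruct (Nat.ltb_spec (2 * i + 1) (2 * N0)); destruct (Nat.ltb_spec i N0); try lia.
    + apply pr_odd.
    + f_equal; lia.
Qed.

Lemma star_realised (M : structure L) (a' b' : nat -> M) phi :
  Gpair T Phi M a' b' -> sat M (pr a' b') (star phi) ->
  exists a b, Gpair T Phi M a b /\ sat M (pr a b) phi /\ same_entries a a' /\
    (forall i, i < N0 -> a i = a' i /\ b i = b' i).
Proof.
  intros G Hs. pose proof G as [HM [Da' [Db' S']]].
  assert (Hin : forall v, exists i, a' i = pr a' b' v).
  { intro v. unfold pr. destruct (Nat.even v); [eauto|].
    destruct (proj2 S' (Nat.div2 v)) as [i Hi]. eauto. }
  destruct (Exn_witness_closed M _ (entries_witness_closed Phi Hrich M a' Da') _ _ _ Hin Hs)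
    as [t [St Ht]].
  apply sat_glue_body in Ht. rewrite ext_pr in Ht. apply sat_And in Ht as [Hphi HD].
  rewrite sat_D_pair in HD.
  destruct (D_extension_within Phi HPhi Hrich M a' (nn phi) (split1 a' t) Da')
    as [a [A1 [A2 A3]]].
  { intros i _. unfold split1. destruct (Nat.ltb i N0); [eauto|apply St]. }
  { intros k Hk. apply HD; auto. }
  destruct (D_extension_within Phi HPhi Hrich M a' (nn phi) (split2 b' t) Da')
    as [b [B1 [B2 B3]]].
  { intros i _. unfold split2. destruct (Nat.ltb i N0); [|apply St].
    destruct (proj2 S' i) as [j Hj]. eauto. }
  { intros k Hk. apply HD; auto. }
  exists a, b.
  split; [apply Gpair_intro; auto; eapply same_entries_trans; eauto using same_entries_sym|].
  split; [|split; [auto|]].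
  - apply (sat_pr_prefix M a b (split1 a' t) (split2 b' t) (nn phi) phi); auto.
    apply ffvb_pr. unfold nn; lia.
  - intros i Hi. rewrite A1, B1 by (unfold nn; lia). unfold split1, split2.
    destruct (Nat.ltb_spec i N0); [auto|lia].
Qed.

Lemma star_transfer (M : structure L) (a b a' b' : nat -> M) phi :
  Gpair T Phi M a' b' -> (forall i, i < N0 -> a i = a' i /\ b i = b' i) ->
  sat M (pr a b) (star phi) ->
  exists a0 b0, Gpair T Phi M a0 b0 /\ sat M (pr a0 b0) phi /\
    (H (tp2 M a0 b0) <-> H (tp2 M a' b')).
Proof.
  intros G' Hpre X.
  apply (sat_pr_prefix M a b a' b' N0 _ Hpre (ffvb_star phi)) in X.
  destruct (star_realised M a' b' phi G' X) as [a0 [b0 [G0 [P0 [S0 Q0]]]]].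
  exists a0, b0. split; auto. split; auto. apply H_prefix_invariant; auto.
Qed.

(* Every pair of prefixes continues to a pair in G, which lies in a basic open
   set inside H or inside its complement; compactness keeps finitely many. *)
Lemma star_cover : exists l, (forall phi, In phi l -> openH phi \/ openC phi) /\
  forall (M : structure L) (s : nat -> M), model T M -> sat M s (D_pair N0) ->
    exists phi, In phi l /\ sat M s (star phi).
Proof.
  destruct (compactness_cover HL T (fun psi => psi = D_pair N0)
              (fun phi => openH phi \/ openC phi) star) as [l [Hl Hcov]].
  - intros M s HM Hs. specialize (Hs _ eq_refl).
    rewrite (pr_halves s) in Hs |- *. set (u := fun i => s (2 * i)) in *.
    set (w := fun i => s (2 * i + 1)) in *. rewrite sat_D_pair in Hs.
    destruct (D_extension_covering Phi HPhi Hrich M N0 u u) as [a0 [A1 [A2 _]]];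
      [intros; apply Hs; auto|].
    destruct (D_extension_covering Phi HPhi Hrich M N0 w w) as [b0 [B1 [B2 _]]];
      [intros; apply Hs; auto|].
    destruct (D_extension3 Phi HPhi Hrich M a0 b0 b0 N0 A2 B2 B2)
      as [a' [b' [c' [Da' [Db' [_ [S1 [_ Hpre]]]]]]]].
    assert (G : Gpair T Phi M a' b') by (apply Gpair_intro; auto).
    assert (Agr : forall phi, sat M (pr a' b') (star phi) -> sat M (pr u w) (star phi)).
    { intro phi. apply (sat_pr_prefix M a' b' u w N0 (star phi)); [|apply ffvb_star].
      intros i Hi. destruct (Hpre i Hi) as [E1 [E2 _]]. rewrite E1, E2, A1, B1; auto. }
    destruct (classic (H (tp2 M a' b'))) as [Hy|Hn].
    + destruct (H_open _ Hy) as [phi [Hp Ho]].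
      exists phi. split; [left; exact Ho|]. apply Agr, star_of; auto.
    + destruct (H_compl_open _ (Gpair_Gset T Phi M a' b' G) Hn) as [phi [Hp Ho]].
      exists phi. split; [right; exact Ho|]. apply Agr, star_of; auto.
  - exists l. split; auto. intros M s HM Hs. apply Hcov; auto. intros psi ->. auto.
Qed.

Lemma H_definable : exists chi, ffvb (2 * N0) chi /\
  forall (M : structure L) (a b a' b' : nat -> M), model T M -> DPhi Phi M a -> DPhi Phi M b ->
    Gpair T Phi M a' b' -> (forall i, i < N0 -> a i = a' i /\ b i = b' i) ->
    (sat M (pr a b) chi <-> H (tp2 M a' b')).
Proof.
  destruct star_cover as [l [Hl Hcov]].
  destruct (disj_exists openH star (2 * N0) l) as [chi [Hchi Hsat]]; [intros; apply ffvb_star|].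
  exists chi. split; auto. intros M a b a' b' HM Da Db G' Hpre.
  rewrite Hsat. split.
  - intros [phi [_ [Ho X]]].
    destruct (star_transfer M a b a' b' phi G' Hpre X) as [a0 [b0 [G0 [P0 E0]]]].
    apply E0, Ho; auto. apply Gpair_Gset; auto.
  - intro Hy. destruct (Hcov M (pr a b) HM) as [phi [I X]].
    { apply sat_D_pair. intros k _. split; [exact (Da k)|exact (Db k)]. }
    exists phi. split; auto. split; auto. destruct (Hl phi I) as [Ho|Hc]; auto. exfalso.
    destruct (star_transfer M a b a' b' phi G' Hpre X) as [a0 [b0 [G0 [P0 E0]]]].
    apply (Hc (tp2 M a0 b0)); [apply Gpair_Gset; auto|auto|apply E0; auto].
Qed.

End PrefixDetermined.

Section DefiningFormula.
Variables (N0 : nat) (chi : formula L).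
Hypothesis chi_spec : forall (M : structure L) (a b a' b' : nat -> M),
  model T M -> DPhi Phi M a -> DPhi Phi M b ->
  Gpair T Phi M a' b' -> (forall i, i < N0 -> a i = a' i /\ b i = b' i) ->
  (sat M (pr a b) chi <-> H (tp2 M a' b')).

Lemma chi_Gpair (M : structure L) a b : Gpair T Phi M a b -> (sat M (pr a b) chi <-> H (tp2 M a b)).
Proof. intros G. pose proof G as [HM [Da [Db _]]]. apply chi_spec; auto. Qed.

Lemma chi_def_equiv : def_equiv T Phi chi.
Proof.
  intros M HM. split; [|split].
  - intros a Da. apply chi_Gpair; [apply Gpair_diag; auto|]. apply H_diag; auto.
  - intros a b Da Db X.
    destruct (D_extension3 Phi HPhi Hrich M a b b N0 Da Db Db)
      as [a' [b' [c' [Da' [Db' [_ [S1 [_ Hpre]]]]]]]].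
    assert (G : Gpair T Phi M a' b') by (apply Gpair_intro; auto).
    apply (chi_spec M b a b' a'); auto using Gpair_sym;
      [intros i Hi; destruct (Hpre i Hi) as [? [? ?]]; auto|].
    apply H_sym; auto. apply (chi_spec M a b a' b'); auto.
    intros i Hi. destruct (Hpre i Hi) as [? [? ?]]; auto.
  - intros a b c Da Db Dc X Y.
    destruct (D_extension3 Phi HPhi Hrich M a b c N0 Da Db Dc)
      as [a' [b' [c' [Da' [Db' [Dc' [S1 [S2 Hpre]]]]]]]].
    assert (Gab : Gpair T Phi M a' b') by (apply Gpair_intro; auto).
    assert (Gbc : Gpair T Phi M b' c') by (apply Gpair_intro; auto).
    assert (Gac : Gpair T Phi M a' c') by (apply (Gpair_trans T Phi M _ b'); auto).
    apply (chi_spec M a c a' c'); auto; [intros i Hi; destruct (Hpre i Hi) as [? [? ?]]; auto|].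
    apply (H_trans M a' b' c'); auto.
    + apply (chi_spec M a b a' b'); auto. intros i Hi. destruct (Hpre i Hi) as [? [? ?]]; auto.
    + apply (chi_spec M b c b' c'); auto. intros i Hi. destruct (Hpre i Hi) as [? [? ?]]; auto.
Qed.

Lemma bracket_chi p : bracket T Phi chi p <-> H p.
Proof.
  split.
  - intros [Gp Hp]. pose proof Gp as [M [a [b [G E]]]].
    apply (H_eqty (tp2 M a b)); [|auto|intro; split; apply E].
    apply chi_Gpair; auto. apply E; auto.
  - intro Hp. split; [apply H_Gset; auto|].
    pose proof (H_Gset p Hp) as [M [a [b [G E]]]].
    apply E. apply chi_Gpair; auto. apply (H_eqty p); auto. apply Gpair_Gset; auto.
Qed.

End DefiningFormula.

Lemma Hcal_bracket : exists E, def_equiv T Phi E /\ (forall p, bracket T Phi E p <-> H p).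
Proof.
  destruct H_prefix_nbhd as [N0 H_prefix].
  destruct (H_definable N0 H_prefix) as [chi [_ Hchi]].
  exists chi. split; [apply (chi_def_equiv N0)|apply (bracket_chi N0)]; auto.
Qed.

End Surjectivity.

Theorem lemma3p6 (L : language) (T : theory L) (Phi : nat -> formula L)
  (HL : countable_language L) (HT : complete_theory T)
  (HT2 : no_singleton_model T) (HPhi : seq_ok Phi) (Hrich : rich Phi) :
  (* E |-> [E]_G lands in the set of clopen H = H H^-1 containing B *)
  (forall E, def_equiv T Phi E -> Hcal T Phi (bracket T Phi E)) /\
  (* injective modulo agreement on D_Phi *)
  (forall E E', def_equiv T Phi E -> def_equiv T Phi E' ->
     (forall p, bracket T Phi E p <-> bracket T Phi E' p) -> agree_on_D T Phi E E') /\
  (* surjective *)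
  (forall H, Hcal T Phi H ->
     exists E, def_equiv T Phi E /\ (forall p, bracket T Phi E p <-> H p)) /\
  (* the coset map tp(a,b)H |-> [b]_E *)
  (forall (E : formula L) (M : structure L) (a : nat -> M),
     def_equiv T Phi E -> model T M -> DPhi Phi M a ->
     (forall m : M, exists i, a i = m) ->
     (* well-defined and injective *)
     (forall b b' : nat -> M, Gpair T Phi M a b -> Gpair T Phi M a b' ->
        ((forall k, coset T Phi (tp2 M a b) (bracket T Phi E) k <->
                    coset T Phi (tp2 M a b') (bracket T Phi E) k)
         <-> sat M (pr b b') E)) /\
     (* every coset in e G / H is of the form tp(a,b) H with b in M *)
     (forall C, eGmodH T Phi (tp M a) (bracket T Phi E) C ->
        exists b : nat -> M, Gpair T Phi M a b /\
          (forall k, C k <-> coset T Phi (tp2 M a b) (bracket T Phi E) k)) /\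
     (* onto the E-classes of tuples in M realising D_Phi *)
     (forall b' : nat -> M, DPhi Phi M b' ->
        exists b : nat -> M, Gpair T Phi M a b /\ sat M (pr b b') E)).
Proof.
  split; [|split; [|split]].
  - intros E HE. apply bracket_Hcal. exact HE.
  - intros E E' _ _. apply bracket_injective; assumption.
  - intros H HH. apply Hcal_bracket; assumption.
  - intros E M a HE HM Da Hon. split; [|split].
    + apply coset_eq_iff. exact HE.
    + apply eGmodH_coset. exact HM.
    + apply E_class_Gpair; assumption.
Qed.
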